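(* The class of models of $\mathbb{R}\mathsf{FR}$ has the joint embedding property and the amalgamation property.
   Context: An $\mathbb{R}$-forest is a complete extended ($[0,\infty]$-valued) metric space such that each set $\{y:d(x,y)<\infty\}$ is an $\mathbb{R}$-tree (uniquely arc-connected complete metric space with arcs isometric to real intervals). A function $f:X^2\to[0,1]$ is $1$-$1$-Lipschitz if $x\mapsto f(a,x)$ and $x\mapsto f(x,a)$ are $1$-Lipschitz for every $a\in X$. $\mathbb{R}\mathsf{FR}$ is the theory in the language consisting of an extended metric and a $[0,1]$-valued binary predicate $R$ saying that the underlying metric space is an $\mathbb{R}$-forest and $R$ is $1$-$1$-Lipschitz. The empty structure is allowed as a model. *)

From Stdlib Require Import Reals.
From Coquelicot Require Import Rbar.
Open Scope R_scope.
Set Implicit Arguments.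

Section Defs.
Variable X : Type.
Variable d : X -> X -> Rbar.

Definition ext_metric : Prop :=
  (forall x y, Rbar_le (Finite 0) (d x y)) /\
  (forall x, d x x = Finite 0) /\
  (forall x y, d x y = Finite 0 -> x = y) /\
  (forall x y, d x y = d y x) /\
  (forall x y z, Rbar_le (d x z) (Rbar_plus (d x y) (d y z))).

Definition cauchy_seq (u : nat -> X) : Prop :=
  forall eps, 0 < eps -> exists N, forall m n, (N <= m)%nat -> (N <= n)%nat ->
    Rbar_lt (d (u m) (u n)) (Finite eps).

Definition converges_to (u : nat -> X) (x : X) : Prop :=
  forall eps, 0 < eps -> exists N, forall n, (N <= n)%nat ->
    Rbar_lt (d (u n) x) (Finite eps).

Definition complete_in (S : X -> Prop) : Prop :=
  forall u : nat -> X, (forall n, S (u n)) -> cauchy_seq u ->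
    exists x, S x /\ converges_to u x.

Definition is_arc_in (S : X -> Prop) (a b : X) (g : R -> X) : Prop :=
  g 0 = a /\ g 1 = b /\
  (forall t, 0 <= t <= 1 -> S (g t)) /\
  (forall s t, 0 <= s <= 1 -> 0 <= t <= 1 -> g s = g t -> s = t) /\
  (forall t, 0 <= t <= 1 -> forall eps, 0 < eps -> exists delta, 0 < delta /\
     forall s, 0 <= s <= 1 -> Rabs (s - t) < delta ->
       Rbar_lt (d (g s) (g t)) (Finite eps)).

Definition arc_image (g : R -> X) (y : X) : Prop :=
  exists t, 0 <= t <= 1 /\ g t = y.

(* a subset A of X is isometric (for the induced metric) to a real interval
   (an arc being compact, this interval is a closed bounded one [0,L]) *)
Definition isometric_to_interval (A : X -> Prop) : Prop :=
  exists (L : R) (f : R -> X), 0 <= L /\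
    (forall y, A y <-> exists s, 0 <= s <= L /\ f s = y) /\
    (forall s t, 0 <= s <= L -> 0 <= t <= L -> d (f s) (f t) = Finite (Rabs (s - t))).

(* S, with the induced metric, is an R-tree: a complete metric space
   (finite distances) which is uniquely arc-connected and whose arcs are
   isometric to real intervals *)
Definition is_Rtree (S : X -> Prop) : Prop :=
  (forall x y, S x -> S y -> exists r, d x y = Finite r) /\
  complete_in S /\
  (forall a b, S a -> S b -> a <> b -> exists g, is_arc_in S a b g) /\
  (forall a b g h, is_arc_in S a b g -> is_arc_in S a b h ->
     forall y, arc_image g y <-> arc_image h y) /\
  (forall a b g, is_arc_in S a b g -> isometric_to_interval (arc_image g)).

Definition is_Rforest : Prop :=
  ext_metric /\ complete_in (fun _ => True) /\
  forall x, is_Rtree (fun y => Rbar_lt (d x y) p_infty).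

Definition one_one_lipschitz (P : X -> X -> R) : Prop :=
  (forall x y, 0 <= P x y <= 1) /\
  (forall a x y, Rbar_le (Finite (Rabs (P a x - P a y))) (d x y)) /\
  (forall a x y, Rbar_le (Finite (Rabs (P x a - P y a))) (d x y)).
End Defs.

(* a model of RFR (possibly empty carrier) *)
Record RFRmodel := {
  carrier :> Type;
  mdist : carrier -> carrier -> Rbar;
  mpred : carrier -> carrier -> R;
  m_forest : is_Rforest mdist;
  m_lip : one_one_lipschitz mdist mpred
}.

Definition embedding (M N : RFRmodel) (f : M -> N) : Prop :=
  (forall x y, mdist N (f x) (f y) = mdist M x y) /\
  (forall x y, mpred N (f x) (f y) = mpred M x y).

Definition JEP : Prop :=
  forall A B : RFRmodel, exists (C : RFRmodel) (f : A -> C) (g : B -> C),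
    embedding A C f /\ embedding B C g.

Definition AP : Prop :=
  forall (A B C : RFRmodel) (f : A -> B) (g : A -> C),
    embedding A B f -> embedding A C g ->
    exists (D : RFRmodel) (f' : B -> D) (g' : C -> D),
      embedding B D f' /\ embedding C D g' /\ forall a, f' (f a) = g' (g a).

From Stdlib Require Import Reals Lra Lia ClassicalEpsilon Classical ProofIrrelevance.
From Coquelicot Require Import Rcomplements Rbar.
Open Scope R_scope.
Set Implicit Arguments.

(* Given embeddings f : A -> B and g : A -> C, glue B and C along A.  The image of an
   R-forest under an isometric embedding into another R-forest is closed and convex, so
   every c in C at finite distance from g A has a gate p in A, with
   d(c, g a) = d(c, g p) + d(p, a) for all a; the glued distance from b to c is
   d(b, f p) + d(g p, c), and infinite if c has no gate.  An arc of the glued space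
   between two points of B stays in B (it could only leave and re-enter B through A, and
   A is convex in C), and an arc from B to C runs through B to the gate and then through
   C; hence the glued space is again an R-forest.  The predicate is extended by the
   McShane-type formula R(u,v) = inf min(1, R(s,t) + d(u,s) + d(v,t)) over the pairs
   (s,t) lying both in B or both in C.  This is 1-1-Lipschitz, and it agrees with R_B
   and R_C because a path from one side to the other passes through A, where R_B and R_C
   agree.  Joint embedding is amalgamation over the empty model. *)

Create HintDb rbar_nonneg.

(* [rbar_crunch] case-splits every atomic [Rbar] subterm that [rbar_nonneg] proves
   nonnegative into a real or [p_infty] and tries [lra]; it never fails, so it is only
   used to close goals. *)
Ltac rbar_atom e :=
  lazymatch type of e with
  | Rbar => lazymatch e with
            | Finite _ => fail
            | p_infty => fail
            | m_infty => fail
            | Rbar_plus _ _ => fail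
            | _ => idtac end
  end.

Ltac rbar_split e :=
  let H := fresh "Hnn" in
  assert (H : Rbar_le (Finite 0) e) by (solve [eauto with rbar_nonneg]);
  let v := fresh "v" in
  set (v := e) in *; clearbody v;
  destruct v as [?r| |]; [ | | exfalso; exact H].

Ltac rbar_clean :=
  repeat match goal with
  | H : Finite _ = Finite _ |- _ => injection H; clear H; intro H
  | H : p_infty = Finite _ |- _ => discriminate H
  | H : Finite _ = p_infty |- _ => discriminate H
  | H : p_infty = p_infty |- _ => clear H
  | H : True |- _ => clear H
  | H : False |- _ => destruct H
  end.

Ltac rbar_crunch :=
  repeat match goal with
  | |- context [?e] => rbar_atom e; rbar_split e
  | H : context [?e] |- _ => rbar_atom e; rbar_split e
  end; simpl in *; rbar_clean;
  try solve [lra | tauto | exfalso; lra | f_equal; lra].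

Lemma Rbar_plus_finite {x y : Rbar} {z : R} :
  Rbar_plus x y = Finite z -> Rbar_le (Finite 0) x -> Rbar_le (Finite 0) y ->
  exists r s, x = Finite r /\ y = Finite s /\ z = r + s /\ 0 <= r /\ 0 <= s.
Proof.
  destruct x as [r| |], y as [s| |]; simpl; intros E Hx Hy; try discriminate; try contradiction.
  injection E; intros; exists r, s; repeat split; auto; lra.
Qed.

Lemma ratio_in_unit a b : 0 <= a <= b -> 0 < b -> 0 <= a / b <= 1.
Proof.
  intros Ha Hb; split; [apply Rdiv_le_0_compat; lra|].
  apply Rle_div_l; lra.
Qed.

Section ExtMetric.
Variable X : Type.
Variable d : X -> X -> Rbar.
Hypothesis Hm : ext_metric d.

Lemma edist_ge0 x y : Rbar_le (Finite 0) (d x y). Proof. apply Hm. Qed.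
Lemma edist_refl x : d x x = Finite 0. Proof. apply Hm. Qed.
Lemma edist_eq0 x y : d x y = Finite 0 -> x = y. Proof. apply Hm. Qed.
Lemma edist_sym x y : d x y = d y x. Proof. apply Hm. Qed.
Lemma edist_triangle x y z : Rbar_le (d x z) (Rbar_plus (d x y) (d y z)). Proof. apply Hm. Qed.
Local Hint Resolve edist_ge0 : rbar_nonneg.

Definition fin_dist x y := Rbar_lt (d x y) p_infty.

Lemma fin_dist_real x y : fin_dist x y -> exists r, d x y = Finite r /\ 0 <= r.
Proof.
  unfold fin_dist; intros H. generalize (edist_ge0 x y).
  destruct (d x y) as [r| |]; simpl in *; try tauto. exists r; auto.
Qed.

Lemma fin_dist_infty x y : ~ fin_dist x y -> d x y = p_infty.
Proof.
  unfold fin_dist; generalize (edist_ge0 x y); destruct (d x y); simpl; tauto.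
Qed.

Lemma fin_dist_trans x y z : fin_dist x y -> fin_dist y z -> fin_dist x z.
Proof. unfold fin_dist; intros H1 H2. generalize (edist_triangle x y z). rbar_crunch. Qed.

Lemma fin_dist_sym x y : fin_dist x y -> fin_dist y x.
Proof. unfold fin_dist; rewrite edist_sym; auto. Qed.

Lemma fin_dist_refl x : fin_dist x x.
Proof. unfold fin_dist; rewrite edist_refl; simpl; auto. Qed.

Lemma edist_pos x y r : x <> y -> d x y = Finite r -> 0 < r.
Proof.
  intros N E. generalize (edist_ge0 x y); rewrite E; simpl; intros [H|H]; auto.
  subst; exfalso; apply N, edist_eq0; auto.
Qed.

Lemma eq_of_edist_lt_all x y : (forall eps, 0 < eps -> Rbar_lt (d x y) (Finite eps)) -> x = y.
Proof.
  intros H. apply edist_eq0. generalize (edist_ge0 x y).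
  destruct (d x y) as [r| |]; simpl; intros Hr.
  - f_equal. destruct Hr as [Hr|Hr]; auto. specialize (H (r/2) ltac:(lra)). simpl in H. lra.
  - specialize (H 1 ltac:(lra)). simpl in H. contradiction.
  - contradiction.
Qed.

Lemma arc_sub S a b g s1 s2 : is_arc_in d S a b g -> 0 <= s1 -> s1 < s2 -> s2 <= 1 ->
  is_arc_in d S (g s1) (g s2) (fun t => g (s1 + t * (s2 - s1))).
Proof.
  intros [G0 [G1 [GS [Gi Gc]]]] h1 h2 h3. split; [|split; [|split; [|split]]].
  - f_equal; ring.
  - f_equal; ring.
  - intros t Ht; apply GS; nra.
  - intros s t Hs Ht E.
    assert (E2 : s1 + s * (s2 - s1) = s1 + t * (s2 - s1)) by (apply Gi; [nra|nra|exact E]).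
    assert (H : (s - t) * (s2 - s1) = 0) by lra.
    apply Rmult_integral in H. destruct H; lra.
  - intros t Ht eps Heps.
    destruct (Gc (s1 + t * (s2 - s1))) with eps as [del [Hd Hdd]]; try nra; auto.
    exists (del / (s2 - s1)). split; [apply Rdiv_lt_0_compat; lra|].
    intros s Hs Hst. apply Hdd; [nra|].
    replace (s1 + s * (s2 - s1) - (s1 + t * (s2 - s1))) with ((s - t) * (s2 - s1)) by ring.
    rewrite Rabs_mult, (Rabs_right (s2 - s1)) by lra.
    apply Rlt_div_r; lra.
Qed.

Lemma arc_sub_image (g : R -> X) s1 s2 y : 0 <= s1 -> s1 < s2 -> s2 <= 1 ->
  arc_image (fun t => g (s1 + t * (s2 - s1))) y <-> exists t, s1 <= t <= s2 /\ g t = y.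
Proof.
  intros h1 h2 h3; split.
  - intros [t [Ht E]]. exists (s1 + t * (s2 - s1)); split; auto. nra.
  - intros [t [Ht E]]. exists ((t - s1) / (s2 - s1)). split.
    + apply ratio_in_unit; lra.
    + rewrite <- E; f_equal. field. lra.
Qed.

Lemma arc_rev S a b g : is_arc_in d S a b g -> is_arc_in d S b a (fun t => g (1 - t)).
Proof.
  intros [G0 [G1 [GS [Gi Gc]]]]. split; [|split; [|split; [|split]]].
  - rewrite Rminus_0_r; auto.
  - rewrite Rminus_diag; auto.
  - intros t Ht; apply GS; lra.
  - intros s t Hs Ht E; apply Gi in E; lra.
  - intros t Ht eps Heps. destruct (Gc (1 - t)) with eps as [del [Hd Hdd]]; try lra; auto.
    exists del; split; auto. intros s Hs Hst. apply Hdd; [lra|].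
    replace (1 - s - (1 - t)) with (-(s - t)) by ring. rewrite Rabs_Ropp; auto.
Qed.

Lemma arc_rev_image (g : R -> X) y : arc_image (fun t => g (1 - t)) y <-> arc_image g y.
Proof.
  split; intros [t [Ht E]]; exists (1 - t); split; try lra; auto.
  rewrite <- E; f_equal; ring.
Qed.

Lemma arc_ends_neq S a b g : is_arc_in d S a b g -> a <> b.
Proof.
  intros [G0 [G1 [GS [Gi Gc]]]] E. subst.
  assert (0 = 1) by (apply Gi; try lra; congruence). lra.
Qed.

Lemma arc_in_change S S' a b g : is_arc_in d S a b g ->
  (forall t, 0 <= t <= 1 -> S' (g t)) -> is_arc_in d S' a b g.
Proof. intros [G0 [G1 [GS [Gi Gc]]]] H. repeat split; auto. Qed.

Lemma arc_image_ext (g h : R -> X) y :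
  (forall t, 0 <= t <= 1 -> g t = h t) -> (arc_image g y <-> arc_image h y).
Proof. intros H; split; intros [t [Ht E]]; exists t; split; auto; rewrite <- E; [symmetry|]; auto. Qed.

Definition isom_on (L : R) (f : R -> X) :=
  forall s t, 0 <= s <= L -> 0 <= t <= L -> d (f s) (f t) = Finite (Rabs (s - t)).

Lemma isom_on_arc S L f : 0 < L -> isom_on L f -> (forall s, 0 <= s <= L -> S (f s)) ->
  is_arc_in d S (f 0) (f L) (fun t => f (t * L)).
Proof.
  intros HL Hf HS. split; [|split; [|split; [|split]]].
  - f_equal; ring.
  - f_equal; ring.
  - intros t Ht; apply HS; nra.
  - intros s t Hs Ht E.
    assert (H : d (f (s * L)) (f (t * L)) = Finite 0) by (rewrite E; apply edist_refl).
    rewrite Hf in H by nra. injection H; intro H'.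
    assert (H0 : (s - t) * L = 0).
    { apply Rabs_eq_0. rewrite <- H'. f_equal. ring. }
    apply Rmult_integral in H0; destruct H0; lra.
  - intros t Ht eps Heps. exists (eps / L). split; [apply Rdiv_lt_0_compat; lra|].
    intros s Hs Hst. rewrite Hf by nra. simpl.
    replace (s * L - t * L) with ((s - t) * L) by ring. rewrite Rabs_mult, (Rabs_right L) by lra.
    apply Rlt_div_r; lra.
Qed.


Lemma fin_dist_complete x : complete_in d (fun _ => True) -> complete_in d (fin_dist x).
Proof.
  intros Hc u Hu Hcau. destruct (Hc u (fun _ => I) Hcau) as [z [_ Hz]].
  exists z; split; auto. destruct (Hz 1 ltac:(lra)) as [N HN]. specialize (HN N (le_n N)).
  apply fin_dist_trans with (u N); auto. unfold fin_dist. rbar_crunch.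
Qed.

End ExtMetric.

Definition continuous_on (a b : R) (h : R -> R) :=
  forall t, a <= t <= b -> forall eps, 0 < eps -> exists del, 0 < del /\
    forall s, a <= s <= b -> Rabs (s - t) < del -> Rabs (h s - h t) < eps.

Lemma continuous_on_sub a b a' b' h : a <= a' -> b' <= b ->
  continuous_on a b h -> continuous_on a' b' h.
Proof.
  intros Ha Hb Hc t Ht eps He. destruct (Hc t ltac:(lra) eps He) as [del [Hd Hdd]].
  exists del; split; auto. intros s Hs Hst; apply Hdd; auto; lra.
Qed.

Lemma continuous_on_opp a b h : continuous_on a b h -> continuous_on a b (fun x => - h x).
Proof.
  intros Hc t Ht eps He. destruct (Hc t Ht eps He) as [del [Hd Hdd]]. exists del; split; auto.
  intros s Hs Hst. replace (- h s - - h t) with (- (h s - h t)) by ring. rewrite Rabs_Ropp; auto.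
Qed.

Lemma continuous_on_flip h : continuous_on 0 1 h -> continuous_on 0 1 (fun t => h (1 - t)).
Proof.
  intros Hc t Ht eps He. destruct (Hc (1 - t) ltac:(lra) eps He) as [del [Hd Hdd]].
  exists del; split; auto. intros s Hs Hst. apply Hdd; [lra|].
  replace (1 - s - (1 - t)) with (- (s - t)) by ring. rewrite Rabs_Ropp; auto.
Qed.

Lemma ivt_le h a b y : a < b -> continuous_on a b h -> h a <= y <= h b ->
  exists c, a <= c <= b /\ h c = y.
Proof.
  intros Hab Hc Hy.
  set (E := fun x => a <= x <= b /\ h x <= y).
  assert (HB : bound E) by (exists b; intros x [Hx _]; lra).
  assert (HE : exists x, E x) by (exists a; split; lra).
  destruct (completeness E HB HE) as [c [Hub Hlub]].
  assert (Hac : a <= c) by (apply Hub; split; lra).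
  assert (Hcb : c <= b) by (apply Hlub; intros x [Hx _]; lra).
  exists c; split; [lra|].
  destruct (Rtotal_order (h c) y) as [Hlt|[Heq|Hgt]]; auto; exfalso.
  - (* some point just right of [c] is still below [y] *)
    assert (c < b) by (destruct (Req_dec c b); [subst; lra | lra]).
    destruct (Hc c (conj Hac Hcb) (y - h c)) as [del [Hd Hdd]]; [lra|].
    set (s := Rmin (c + del / 2) b).
    assert (Hs1 : c < s) by (unfold s; apply Rmin_glb_lt; lra).
    assert (Hs2 : s <= b) by (unfold s; apply Rmin_r).
    assert (Hs3 : s <= c + del/2) by (unfold s; apply Rmin_l).
    assert (Es : E s).
    { split; [lra|].
      assert (Rabs (h s - h c) < y - h c) by (apply Hdd; [lra| rewrite Rabs_right; lra]).
      apply Rabs_def2 in H0; lra. }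
    apply Hub in Es; lra.
  - (* every point just left of [c] is above [y] *)
    assert (a < c) by (destruct (Req_dec a c); [subst; lra | lra]).
    destruct (Hc c (conj Hac Hcb) (h c - y)) as [del [Hd Hdd]]; [lra|].
    assert (Hm : 0 < Rmin del (c - a)) by (apply Rmin_glb_lt; lra).
    assert (c <= c - Rmin del (c - a)); [|lra].
    apply Hlub. intros x [Hx Hxy]. destruct (Rle_dec x (c - Rmin del (c - a))); auto.
    exfalso. assert (x <= c) by (apply Hub; split; auto).
    assert (Rmin del (c - a) <= del) by apply Rmin_l.
    assert (Rabs (h x - h c) < h c - y) by (apply Hdd; [lra | rewrite Rabs_left1; lra]).
    apply Rabs_def2 in H2; lra.
Qed.

Lemma ivt_ge h a b y : a < b -> continuous_on a b h -> h b <= y <= h a ->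
  exists c, a <= c <= b /\ h c = y.
Proof.
  intros Hab Hc Hy.
  destruct (@ivt_le (fun x => - h x) a b (-y)) as [c [Hc1 Hc2]]; auto.
  - apply continuous_on_opp; auto.
  - lra.
  - exists c; split; auto; lra.
Qed.

(* If [h 0] were interior, the IVT between the preimages of [0] and [L] would
   hit [h 0] a second time. *)
Lemma bijection_onto_interval_endpoint h L : 0 < L ->
  (forall t, 0 <= t <= 1 -> 0 <= h t <= L) ->
  (forall s t, 0 <= s <= 1 -> 0 <= t <= 1 -> h s = h t -> s = t) ->
  (forall s, 0 <= s <= L -> exists t, 0 <= t <= 1 /\ h t = s) ->
  continuous_on 0 1 h ->
  h 0 = 0 \/ h 0 = L.
Proof.
  intros HL Hr Hi Hs Hc.
  destruct (Req_dec (h 0) 0) as [E|N0]; auto. destruct (Req_dec (h 0) L) as [E|NL]; auto.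
  exfalso. assert (H0 := Hr 0 ltac:(lra)).
  destruct (Hs 0 ltac:(lra)) as [t0 [Ht0 E0]]. destruct (Hs L ltac:(lra)) as [t1 [Ht1 E1]].
  assert (t0 <> 0) by (intro; subst; auto). assert (t1 <> 0) by (intro; subst; auto).
  assert (t0 <> t1) by (intro; subst; lra).
  destruct (Rlt_dec t0 t1).
  - destruct (@ivt_le h t0 t1 (h 0)) as [c [Hc1 Hc2]]; try lra.
    + apply continuous_on_sub with 0 1; lra || auto.
    + assert (c = 0) by (apply Hi; auto; lra). lra.
  - destruct (@ivt_ge h t1 t0 (h 0)) as [c [Hc1 Hc2]]; try lra.
    + apply continuous_on_sub with 0 1; lra || auto.
    + assert (c = 0) by (apply Hi; auto; lra). lra.
Qed.

Section Arcs.
Variable X : Type.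
Variable d : X -> X -> Rbar.
Hypothesis Hm : ext_metric d.

Definition path_continuous (g : R -> X) :=
  forall t, 0 <= t <= 1 -> forall eps, 0 < eps -> exists del, 0 < del /\
    forall s, 0 <= s <= 1 -> Rabs (s - t) < del -> Rbar_lt (d (g s) (g t)) (Finite eps).

Definition path_concat (al be : R -> X) (t : R) : X :=
  if Rle_dec t (1/2) then al (2 * t) else be (2 * t - 1).

Lemma path_concat_l al be t : t <= 1/2 -> path_concat al be t = al (2 * t).
Proof. intros; unfold path_concat; destruct Rle_dec; auto; lra. Qed.

Lemma path_concat_r al be t : 1/2 < t -> path_concat al be t = be (2 * t - 1).
Proof. intros; unfold path_concat; destruct Rle_dec; auto; lra. Qed.

Lemma path_concat_continuous al be : al 1 = be 0 ->
  path_continuous al -> path_continuous be -> path_continuous (path_concat al be).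
Proof.
  intros Hw Ac Bc t Ht eps He.
  destruct (Rlt_dec t (1/2)) as [Tl|Tl]; [|destruct (Rlt_dec (1/2) t) as [Tr|Tr]].
  - destruct (Ac (2 * t) ltac:(lra) eps He) as [del [Hd Hdd]].
    exists (Rmin (del / 2) (1/2 - t)). split; [apply Rmin_glb_lt; lra|].
    intros s Hs Hst. assert (Rmin (del / 2) (1/2 - t) <= del/2) by apply Rmin_l.
    assert (Rmin (del / 2) (1/2 - t) <= 1/2 - t) by apply Rmin_r.
    apply Rabs_def2 in Hst. rewrite !path_concat_l by lra. apply Hdd; [lra|]. apply Rabs_def1; lra.
  - destruct (Bc (2 * t - 1) ltac:(lra) eps He) as [del [Hd Hdd]].
    exists (Rmin (del / 2) (t - 1/2)). split; [apply Rmin_glb_lt; lra|].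
    intros s Hs Hst. assert (Rmin (del / 2) (t - 1/2) <= del/2) by apply Rmin_l.
    assert (Rmin (del / 2) (t - 1/2) <= t - 1/2) by apply Rmin_r.
    apply Rabs_def2 in Hst. rewrite !path_concat_r by lra. apply Hdd; [lra|]. apply Rabs_def1; lra.
  - replace t with (1/2) by lra. rewrite path_concat_l by lra. replace (2 * (1/2)) with 1 by field.
    destruct (Ac 1 ltac:(lra) eps He) as [d1 [Hd1 Hdd1]].
    destruct (Bc 0 ltac:(lra) eps He) as [d2 [Hd2 Hdd2]].
    exists (Rmin (d1 / 2) (d2 / 2)). split; [apply Rmin_glb_lt; lra|].
    intros s Hs Hst. assert (Rmin (d1 / 2) (d2 / 2) <= d1/2) by apply Rmin_l.
    assert (Rmin (d1 / 2) (d2 / 2) <= d2/2) by apply Rmin_r. apply Rabs_def2 in Hst.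
    destruct (Rle_dec s (1/2)).
    + rewrite path_concat_l by lra. apply Hdd1; [lra|]. apply Rabs_def1; lra.
    + rewrite path_concat_r, Hw by lra. apply Hdd2; [lra|]. apply Rabs_def1; lra.
Qed.

Lemma path_concat_image al be y : al 1 = be 0 ->
  arc_image (path_concat al be) y <-> arc_image al y \/ arc_image be y.
Proof.
  intros Hw; split.
  - intros [t [Ht E]]. destruct (Rle_dec t (1/2)).
    + left. exists (2 * t). split; [lra|]. rewrite <- E, path_concat_l by lra; auto.
    + right. exists (2 * t - 1). split; [lra|]. rewrite <- E, path_concat_r by lra; auto.
  - intros [[t [Ht E]]|[t [Ht E]]].
    + exists (t / 2). split; [lra|]. rewrite path_concat_l by lra. rewrite <- E; f_equal; field.
    + destruct (Req_dec t 0) as [->|T0].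
      * exists (1/2). split; [lra|]. rewrite path_concat_l by lra. rewrite <- E, <- Hw. f_equal; field.
      * exists ((t + 1) / 2). split; [lra|]. rewrite path_concat_r by lra. rewrite <- E; f_equal; field.
Qed.

Lemma arc_concat S u w v al be : is_arc_in d S u w al -> is_arc_in d S w v be ->
  (forall y, arc_image al y -> arc_image be y -> y = w) ->
  is_arc_in d S u v (path_concat al be) /\
  forall y, arc_image (path_concat al be) y <-> arc_image al y \/ arc_image be y.
Proof.
  intros Hal Hbe Hint.
  pose proof Hal as [A0 [A1 [AS [Ai Ac]]]]. pose proof Hbe as [B0 [B1 [BS [Bi Bc]]]].
  assert (Hw : al 1 = be 0) by congruence.
  split; [split; [|split; [|split; [|split]]] | intros y; apply path_concat_image; auto].
  - rewrite path_concat_l by lra; rewrite Rmult_0_r; auto.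
  - rewrite path_concat_r by lra; replace (2 * 1 - 1) with 1 by ring; auto.
  - intros t Ht. destruct (Rle_dec t (1/2)).
    + rewrite path_concat_l by lra; apply AS; lra.
    + rewrite path_concat_r by lra; apply BS; lra.
  -     assert (Cross : forall s t, 0 <= s <= 1/2 -> 1/2 < t <= 1 -> al (2 * s) <> be (2 * t - 1)).
    { intros s t Hs Ht E.
      assert (Ew : be (2 * t - 1) = w).
      { rewrite <- E. apply Hint; [exists (2 * s) | exists (2 * t - 1)]; split; auto; lra. }
      assert (2 * t - 1 = 0) by (apply Bi; try lra; congruence). lra. }
    intros s t Hs Ht E.
    destruct (Rle_dec s (1/2)); destruct (Rle_dec t (1/2));
      [rewrite !path_concat_l in E by lra | rewrite path_concat_l, path_concat_r in E by lra
      | rewrite path_concat_r, path_concat_l in E by lra | rewrite !path_concat_r in E by lra].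
    + apply Ai in E; lra.
    + exfalso; apply (Cross s t); auto; lra.
    + exfalso; apply (Cross t s); auto; lra.
    + apply Bi in E; lra.
  - apply path_concat_continuous; auto.
Qed.

Lemma arc_reparam S a b g L phi : is_arc_in d S a b g ->
  (forall y, arc_image g y <-> exists s, 0 <= s <= L /\ phi s = y) -> isom_on d L phi ->
  exists h, (forall t, 0 <= t <= 1 -> 0 <= h t <= L /\ phi (h t) = g t) /\
    (forall s t, 0 <= s <= 1 -> 0 <= t <= 1 -> h s = h t -> s = t) /\
    (forall s, 0 <= s <= L -> exists t, 0 <= t <= 1 /\ h t = s) /\
    continuous_on 0 1 h.
Proof.
  intros [G0 [G1 [GS [Gi Gc]]]] Himg Hiso.
  assert (Hex : forall t, exists s, 0 <= t <= 1 -> 0 <= s <= L /\ phi s = g t).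
  { intros t. destruct (classic (0 <= t <= 1)) as [Ht|Ht].
    - destruct (proj1 (Himg (g t))) as [s Hs]; [exists t; split; auto|]. exists s; auto.
    - exists 0; intros; contradiction. }
  destruct (choice _ Hex) as [h hP].
  assert (hd : forall s t, 0 <= s <= 1 -> 0 <= t <= 1 -> d (g s) (g t) = Finite (Rabs (h s - h t))).
  { intros s t Hs Ht. destruct (hP s Hs) as [A1 A2]. destruct (hP t Ht) as [B1 B2].
    rewrite <- A2, <- B2. apply Hiso; auto. }
  exists h. split; [|split; [|split]]; auto.
  - intros s t Hs Ht E. apply Gi; auto.
    destruct (hP s Hs) as [_ A2]. destruct (hP t Ht) as [_ B2]. congruence.
  - intros s Hs. destruct (proj2 (Himg (phi s))) as [t [Ht E]]; [exists s; auto|].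
    exists t; split; auto. destruct (hP t Ht) as [A1 A2].
    assert (H : d (phi (h t)) (phi s) = Finite 0) by (rewrite A2, E; apply edist_refl; auto).
    rewrite Hiso in H by auto. injection H; intro H'.
    apply Rabs_eq_0 in H'; lra.
  - intros t Ht eps He. destruct (Gc t Ht eps He) as [del [Hd Hdd]]. exists del; split; auto.
    intros s Hs Hst. specialize (Hdd s Hs Hst). rewrite hd in Hdd by auto. exact Hdd.
Qed.

Lemma arc_geodesic S a b g L phi : is_arc_in d S a b g -> 0 <= L ->
  (forall y, arc_image g y <-> exists s, 0 <= s <= L /\ phi s = y) -> isom_on d L phi ->
  exists psi, isom_on d L psi /\ psi 0 = a /\ psi L = b /\ d a b = Finite L /\
    (forall y, arc_image g y <-> exists s, 0 <= s <= L /\ psi s = y).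
Proof.
  intros Harc HL Himg Hiso. pose proof Harc as [G0 [G1 _]].
  destruct (arc_reparam Harc Himg Hiso) as [h [hP [hi [hs hc]]]].
  assert (HL' : 0 < L).
  { destruct HL as [HL|<-]; auto. exfalso. apply (arc_ends_neq Harc).
    rewrite <- G0, <- G1. destruct (hP 0 ltac:(lra)) as [A1 <-]. destruct (hP 1 ltac:(lra)) as [B1 <-].
    f_equal. lra. }
  assert (E0 : h 0 = 0 \/ h 0 = L) by (apply bijection_onto_interval_endpoint; auto; apply hP).
  assert (E1 : h 1 = 0 \/ h 1 = L).
  { assert (H := @bijection_onto_interval_endpoint (fun t => h (1 - t)) L HL').
    cbv beta in H; rewrite Rminus_0_r in H. apply H.
    - intros t Ht; apply hP; lra.
    - intros s t Hs Ht E; apply hi in E; lra.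
    - intros s Hs. destruct (hs s Hs) as [t [Ht E]].
      exists (1 - t); split; [lra|]. rewrite <- E; f_equal; ring.
    - apply continuous_on_flip; auto. }
  assert (N : h 0 <> h 1) by (intro E; apply hi in E; lra).
  destruct (hP 0 ltac:(lra)) as [_ P0]. destruct (hP 1 ltac:(lra)) as [_ P1].
  rewrite G0 in P0. rewrite G1 in P1.
  destruct E0 as [E0|E0]; destruct E1 as [E1|E1]; rewrite E0, E1 in *; try lra.
  - exists phi. repeat split; auto.
    + rewrite <- P0, <- P1, Hiso by lra. f_equal. rewrite Rminus_0_l, Rabs_Ropp, Rabs_right; lra.
    + intros H; apply Himg; auto.
    + intros H; apply Himg; auto.
  - exists (fun s => phi (L - s)). repeat split.
    + intros s t Hs Ht. rewrite Hiso by lra. f_equal.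
      replace (L - s - (L - t)) with (- (s - t)) by ring. apply Rabs_Ropp.
    + rewrite Rminus_0_r; auto.
    + rewrite Rminus_diag; auto.
    + rewrite <- P0, <- P1, Hiso by lra. f_equal. rewrite Rminus_0_r, Rabs_right; lra.
    + intros H. apply Himg in H. destruct H as [s [Hs E]].
      exists (L - s); split; [lra|]. rewrite <- E; f_equal; ring.
    + intros [s [Hs E]]. apply Himg. exists (L - s); split; auto. lra.
Qed.

Lemma arc_image_split (g : R -> X) s y : 0 < s < 1 ->
  arc_image g y <->
  arc_image (fun t => g (0 + t * (s - 0))) y \/ arc_image (fun t => g (s + t * (1 - s))) y.
Proof.
  intros Hs. rewrite !arc_sub_image by lra. split.
  - intros [t [Ht E]]. destruct (Rle_dec t s); [left|right]; exists t; split; auto; lra.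
  - intros [[t [Ht E]]|[t [Ht E]]]; exists t; split; auto; lra.
Qed.

Lemma arc_continuous S a b g : is_arc_in d S a b g -> path_continuous g.
Proof. intros [_ [_ [_ [_ Hc]]]]; exact Hc. Qed.

Definition metric_closed (P : X -> Prop) :=
  forall y, (forall eps, 0 < eps -> exists z, P z /\ Rbar_lt (d y z) (Finite eps)) -> P y.

Lemma last_exit (P : X -> Prop) ga t0 : path_continuous ga -> metric_closed P ->
  P (ga 0) -> 0 <= t0 <= 1 -> ~ P (ga t0) ->
  exists s1, 0 <= s1 < t0 /\ P (ga s1) /\ forall s, s1 < s <= t0 -> ~ P (ga s).
Proof.
  intros Gc HP H0 Ht0 Nt0.
  set (E := fun s => 0 <= s <= t0 /\ P (ga s)).
  assert (HBd : bound E) by (exists t0; intros y [Hy _]; lra).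
  assert (HE : exists y, E y) by (exists 0; split; [lra|auto]).
  destruct (completeness E HBd HE) as [s1 [Hub Hlub]].
  assert (A0 : 0 <= s1) by (apply Hub; split; [lra|auto]).
  assert (A1 : s1 <= t0) by (apply Hlub; intros y [Hy _]; lra).
  assert (Hin : P (ga s1)).
  { apply HP. intros eps He. destruct (Gc s1 ltac:(lra) eps He) as [del [Hd Hdd]].
    destruct (classic (exists s, E s /\ s1 - del < s)) as [[s [[Hs Ps] Hs2]]|NS].
    - assert (s <= s1) by (apply Hub; split; auto).
      exists (ga s); split; auto. rewrite (edist_sym Hm). apply Hdd; [lra|]. apply Rabs_def1; lra.
    - assert (s1 <= s1 - del); [|lra]. apply Hlub. intros y Hy.
      destruct (Rle_dec y (s1 - del)); auto. exfalso; apply NS; exists y; split; auto; lra. }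
  exists s1. split; [|split; auto].
  - split; auto. destruct A1; auto. subst; contradiction.
  - intros s Hs Ps. assert (s <= s1) by (apply Hub; split; [lra|auto]). lra.
Qed.

End Arcs.

Lemma inv_succ_pos k : 0 < / INR (S k).
Proof. apply Rinv_0_lt_compat, lt_0_INR; lia. Qed.

Lemma inv_succ_le K k : (0 < K)%nat -> (K <= k)%nat -> / INR (S k) <= / INR K.
Proof. intros. apply Rinv_le_contravar; [apply lt_0_INR; lia | apply le_INR; lia]. Qed.

Section Isometry.
Variables X Y : Type.
Variable d : X -> X -> Rbar.
Variable e : Y -> Y -> Rbar.
Hypothesis Hd : ext_metric d.
Hypothesis He : ext_metric e.
Variable i : X -> Y.
Hypothesis Hi : forall x y, e (i x) (i y) = d x y.
Let Hd_ge0 x y : Rbar_le (Finite 0) (d x y) := edist_ge0 Hd x y.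
Let He_ge0 x y : Rbar_le (Finite 0) (e x y) := edist_ge0 He x y.
Local Hint Resolve Hd_ge0 He_ge0 : rbar_nonneg.

Lemma isometry_inj x y : i x = i y -> x = y.
Proof. intros E. apply (edist_eq0 Hd). rewrite <- Hi, E. apply (edist_refl He). Qed.

Lemma arc_isometry S S' a b g : is_arc_in d S a b g ->
  (forall t, 0 <= t <= 1 -> S' (i (g t))) -> is_arc_in e S' (i a) (i b) (fun t => i (g t)).
Proof.
  intros [G0 [G1 [GS [Gi Gc]]]] HS. split; [|split; [|split; [|split]]]; try congruence; auto.
  - intros s t Hs Ht E. apply Gi; auto. apply isometry_inj; auto.
  - intros t Ht eps Heps. destruct (Gc t Ht eps Heps) as [del [H1 H2]]. exists del; split; auto.
    intros s Hs Hst. rewrite Hi. auto.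
Qed.

Lemma arc_isometry_image (g : R -> X) z :
  arc_image (fun t => i (g t)) z <-> exists x, z = i x /\ arc_image g x.
Proof.
  split.
  - intros [t [Ht E]]. exists (g t). split; auto. exists t; auto.
  - intros [x [E [t [Ht E']]]]. exists t; split; auto. congruence.
Qed.

Lemma arc_isometry_pull S' u v ga : is_arc_in e S' u v ga ->
  (forall t, 0 <= t <= 1 -> exists x, ga t = i x) ->
  exists g, (forall t, 0 <= t <= 1 -> ga t = i (g t)) /\
    is_arc_in d (fun _ => True) (g 0) (g 1) g.
Proof.
  intros [G0 [G1 [GS [Gi Gc]]]] Hx. destruct (Hx 0 ltac:(lra)) as [x0 _].
  assert (Hex : forall t, exists x, 0 <= t <= 1 -> ga t = i x).
  { intros t. destruct (classic (0 <= t <= 1)) as [Ht|Ht].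
    - destruct (Hx t Ht) as [x Ex]. exists x; auto.
    - exists x0; intros; contradiction. }
  destruct (choice _ Hex) as [g gP].
  exists g. split; auto. split; [|split; [|split; [|split]]]; auto.
  - intros s t Hs Ht E. apply Gi; auto. rewrite gP, gP by auto. congruence.
  - intros t Ht eps Heps. destruct (Gc t Ht eps Heps) as [del [H1 H2]]. exists del; split; auto.
    intros s Hs Hst. rewrite <- Hi, <- gP, <- gP by auto. auto.
Qed.

Lemma isometry_image_closed : complete_in d (fun _ => True) ->
  metric_closed e (fun y => exists x, y = i x).
Proof.
  intros Hc y Hy.
  assert (Hn : forall n : nat, exists x, Rbar_lt (e y (i x)) (Finite (/ INR (S n)))).
  { intros n. destruct (Hy _ (inv_succ_pos n)) as [z [[x ->] Hx]]. eauto. }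
  destruct (choice _ Hn) as [xn Hxn].
  assert (Hcau : cauchy_seq d xn).
  { intros eps Heps. destruct (archimed_cor1 (eps / 2)) as [N [HN HN0]]; [lra|].
    exists N. intros m n Hmn Hnn. rewrite <- Hi.
    assert (T := edist_triangle He (i (xn m)) y (i (xn n))).
    assert (Hm1 := Hxn m). assert (Hn1 := Hxn n). rewrite (edist_sym He) in Hm1.
    assert (Bm := inv_succ_le HN0 Hmn). assert (Bn := inv_succ_le HN0 Hnn). rbar_crunch. }
  destruct (Hc xn (fun _ => I) Hcau) as [x [_ Hx]].
  exists x. apply (eq_of_edist_lt_all He). intros eps Heps.
  destruct (Hx (eps/2) ltac:(lra)) as [N1 HN1].
  destruct (archimed_cor1 (eps / 2)) as [N2 [HN2 HN20]]; [lra|].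
  set (n := max N1 N2). specialize (HN1 n ltac:(lia)).
  assert (T := edist_triangle He y (i (xn n)) (i x)). rewrite Hi in T.
  assert (Hn1 := Hxn n). assert (B := inv_succ_le HN20 (Nat.le_max_r N1 N2 : (N2 <= n)%nat)).
  rbar_crunch.
Qed.

Lemma isometry_approx_complete (u : nat -> Y) : complete_in d (fun _ => True) -> cauchy_seq e u ->
  (forall eps, 0 < eps -> exists N, forall n, (N <= n)%nat ->
     exists x, Rbar_lt (e (u n) (i x)) (Finite eps)) ->
  exists z, converges_to e u z.
Proof.
  intros Hc Hcau Hap.
  assert (Hk : forall k : nat, exists p : nat * X, forall n, (fst p <= n)%nat ->
            Rbar_lt (e (u n) (i (snd p))) (Finite (/ INR (S k)))).
  { intros k. assert (Hk := inv_succ_pos k).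
    destruct (Hap (/ INR (S k) / 2) ltac:(lra)) as [N1 HN1].
    destruct (Hcau (/ INR (S k) / 2) ltac:(lra)) as [M HM].
    destruct (HN1 (max N1 M) ltac:(lia)) as [y Hy]. exists (max N1 M, y). intros n Hn.
    specialize (HM n (max N1 M) ltac:(simpl in Hn; lia) ltac:(lia)).
    assert (T := edist_triangle He (u n) (u (max N1 M)) (i y)). simpl. rbar_crunch. }
  destruct (choice _ Hk) as [pk Pk].
  set (xk := fun k => snd (pk k)).
  assert (Hx : cauchy_seq d xk).
  { intros eps Heps. destruct (archimed_cor1 (eps / 2)) as [K [HK HK0]]; [lra|].
    exists K. intros m n Hmk Hnk. unfold xk. rewrite <- Hi.
    set (q := max (fst (pk m)) (fst (pk n))).
    assert (A1 := Pk m q ltac:(lia)). assert (A2 := Pk n q ltac:(lia)).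
    assert (T := edist_triangle He (i (snd (pk m))) (u q) (i (snd (pk n)))).
    rewrite (edist_sym He _ (u q)) in T.
    assert (B1 := inv_succ_le HK0 Hmk). assert (B2 := inv_succ_le HK0 Hnk). rbar_crunch. }
  destruct (Hc xk (fun _ => I) Hx) as [x [_ Hxl]].
  exists (i x). intros eps Heps.
  destruct (archimed_cor1 (eps / 2)) as [K [HK HK0]]; [lra|].
  destruct (Hxl (eps/2) ltac:(lra)) as [N2 HN2].
  set (k := max K N2). specialize (HN2 k ltac:(lia)).
  exists (fst (pk k)). intros n Hn. assert (A := Pk k n Hn).
  assert (T := edist_triangle He (u n) (i (xk k)) (i x)). rewrite Hi in T.
  assert (B := inv_succ_le HK0 (Nat.le_max_l K N2 : (K <= k)%nat)). unfold xk in *. rbar_crunch.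
Qed.

Lemma isometry_eventually_complete (u : nat -> Y) : complete_in d (fun _ => True) ->
  cauchy_seq e u -> (exists N, forall n, (N <= n)%nat -> exists x, u n = i x) ->
  exists z, converges_to e u z.
Proof.
  intros Hc Hcau [N HN]. apply isometry_approx_complete; auto.
  intros eps Heps. exists N. intros n Hn. destruct (HN n Hn) as [x ->].
  exists x. rewrite (edist_refl He). simpl; auto.
Qed.

End Isometry.

Section Forest.
Variable X : Type.
Variable d : X -> X -> Rbar.
Hypothesis Hf : is_Rforest d.

Lemma forest_metric : ext_metric d.
Proof. apply Hf. Qed.

Let Hm : ext_metric d := forest_metric.

Lemma forest_complete : complete_in d (fun _ => True).
Proof. apply Hf. Qed.

Lemma forest_tree x : is_Rtree d (fin_dist d x).
Proof. apply Hf. Qed.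

Lemma forest_arc_exists a b : fin_dist d a b -> a <> b ->
  exists g, is_arc_in d (fin_dist d a) a b g.
Proof.
  intros. destruct (forest_tree a) as [_ [_ [H1 _]]]. apply H1; auto. apply fin_dist_refl; auto.
Qed.

Lemma forest_arc_unique a b g h : is_arc_in d (fin_dist d a) a b g ->
  is_arc_in d (fin_dist d a) a b h -> forall y, arc_image g y <-> arc_image h y.
Proof. intros. destruct (forest_tree a) as [_ [_ [_ [H1 _]]]]. eapply H1; eauto. Qed.

Lemma forest_geodesic u v : fin_dist d u v ->
  exists L psi, 0 <= L /\ d u v = Finite L /\ psi 0 = u /\ psi L = v /\ isom_on d L psi /\
    (forall s, 0 <= s <= L -> fin_dist d u (psi s)) /\
    (forall g, is_arc_in d (fin_dist d u) u v g ->
       forall y, arc_image g y <-> exists s, 0 <= s <= L /\ psi s = y).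
Proof.
  intros Huv. destruct (classic (u = v)) as [<-|N].
  - exists 0, (fun _ => u). do 4 (split; [auto; try lra; apply edist_refl; auto|]). split; [|split].
    + intros s t Hs Ht. rewrite edist_refl by auto. f_equal.
      replace (s - t) with 0 by lra. symmetry; apply Rabs_R0.
    + intros; apply fin_dist_refl; auto.
    + intros g Hg. exfalso. eapply arc_ends_neq; eauto.
  - destruct (forest_arc_exists Huv N) as [g0 Hg0].
    destruct (forest_tree u) as [_ [_ [_ [_ Hiso]]]].
    destruct (Hiso _ _ _ Hg0) as [L [phi [HL [Himg Hph]]]].
    destruct (arc_geodesic Hm Hg0 HL Himg Hph) as [psi [P1 [P2 [P3 [P4 P5]]]]].
    exists L, psi. do 5 (split; auto). split.
    + intros s Hs. destruct (proj2 (P5 (psi s))) as [t [Ht E]]; [exists s; auto|].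
      rewrite <- E. destruct Hg0 as [_ [_ [HS _]]]. auto.
    + intros g Hg y. rewrite <- P5. symmetry. apply (forest_arc_unique Hg0 Hg).
Qed.

Lemma arc_dist_additive u v g t : is_arc_in d (fin_dist d u) u v g -> 0 <= t <= 1 ->
  exists L s, d u v = Finite L /\ d u (g t) = Finite s /\ d (g t) v = Finite (L - s) /\ 0 <= s <= L.
Proof.
  intros Hg Ht.
  assert (Huv : fin_dist d u v) by (destruct Hg as [_ [H1 [HS _]]]; rewrite <- H1; apply HS; lra).
  destruct (forest_geodesic u v Huv) as [L [psi [HL [D [P0 [PL [Pi [Pc Pimg]]]]]]]].
  destruct (proj1 (Pimg g Hg (g t))) as [s [Hs E]]; [exists t; auto|].
  exists L, s. rewrite <- E, <- P0, <- PL, !Pi by lra.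
  repeat split; try lra; f_equal; unfold Rabs; destruct Rcase_abs; lra.
Qed.

End Forest.

Section Gate.
Variables XA XC : Type.
Variable dA : XA -> XA -> Rbar.
Variable dC : XC -> XC -> Rbar.
Hypothesis HA : is_Rforest dA.
Hypothesis HC : is_Rforest dC.
Variable g : XA -> XC.
Hypothesis Hg : forall x y, dC (g x) (g y) = dA x y.
Let HmA : ext_metric dA := forest_metric HA.
Let HmC : ext_metric dC := forest_metric HC.
Let HA_ge0 x y : Rbar_le (Finite 0) (dA x y) := edist_ge0 HmA x y.
Let HC_ge0 x y : Rbar_le (Finite 0) (dC x y) := edist_ge0 HmC x y.
Local Hint Resolve HA_ge0 HC_ge0 : rbar_nonneg.

Lemma embedding_image_closed : metric_closed dC (fun c => exists a, c = g a).
Proof. exact (isometry_image_closed HmA HmC g Hg (forest_complete HA)). Qed.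

Lemma embedding_image_convex a1 a2 be : is_arc_in dC (fin_dist dC (g a1)) (g a1) (g a2) be ->
  forall t, 0 <= t <= 1 -> exists a, be t = g a.
Proof.
  intros Hbe t Ht. pose proof Hbe as [B0 [B1 [BS _]]].
  assert (N : a1 <> a2) by (intros <-; exact (arc_ends_neq Hbe eq_refl)).
  assert (Hc : fin_dist dA a1 a2) by (unfold fin_dist; rewrite <- Hg, <- B1; apply BS; lra).
  destruct (forest_arc_exists HA Hc N) as [al Hal].
  assert (Hgal : is_arc_in dC (fin_dist dC (g a1)) (g a1) (g a2) (fun t => g (al t))).
  { apply (arc_isometry HmA HmC g Hg _ Hal). intros s Hs. unfold fin_dist; rewrite Hg.
    destruct Hal as [_ [_ [HS _]]]. apply HS; auto. }
  destruct (proj2 (forest_arc_unique HC Hgal Hbe (be t))) as [s [Hs E]]; [exists t; auto|].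
  exists (al s); auto.
Qed.

(* [p] is the gate (nearest-point projection) of [c] onto [g A]. *)
Definition gate c p :=
  fin_dist dC c (g p) /\ forall a, dC c (g a) = Rbar_plus (dC c (g p)) (dA p a).

Lemma gate_image a : gate (g a) a.
Proof.
  split; [apply fin_dist_refl; auto|]. intros a'. rewrite (edist_refl HmC), Hg. rbar_crunch.
Qed.

Lemma gate_of_arc a0 c be : is_arc_in dC (fin_dist dC (g a0)) (g a0) c be ->
  (forall t, 0 <= t <= 1 -> forall a, be t = g a -> be t = g a0) -> gate c a0.
Proof.
  intros Hbe Hin. pose proof Hbe as [B0 [B1 [BS _]]].
  assert (Hc : fin_dist dC c (g a0)) by (apply fin_dist_sym; auto; rewrite <- B1; apply BS; lra).
  split; auto. intros a.
  destruct (classic (a = a0)) as [->|Na]; [rewrite (edist_refl HmA); rbar_crunch|].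
  destruct (classic (fin_dist dA a0 a)) as [Ca|Ca].
  2:{ assert (T := edist_triangle HmC (g a0) c (g a)). rewrite Hg, (edist_sym HmC (g a0) c) in T.
      unfold fin_dist in Hc. rewrite (fin_dist_infty HmA _ _ Ca) in *. rbar_crunch. }
  destruct (forest_arc_exists HA Ca (not_eq_sym Na)) as [al Hal].
  assert (Hgal : is_arc_in dC (fin_dist dC c) (g a0) (g a) (fun t => g (al t))).
  { apply (arc_isometry HmA HmC g Hg _ Hal). intros s Hs. apply fin_dist_trans with (g a0); auto.
    unfold fin_dist; rewrite Hg. destruct Hal as [_ [_ [HS _]]]. apply HS; auto. }
  assert (Hr : is_arc_in dC (fin_dist dC c) c (g a0) (fun t => be (1 - t))).
  { apply arc_in_change with (S := fin_dist dC (g a0)); [apply arc_rev; auto|].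
    intros s Hs. apply fin_dist_trans with (g a0); auto. apply BS; lra. }
  (* [c -> g a0 -> g a] is an arc, so distances add up at [g a0] *)
  destruct (arc_concat Hr Hgal) as [Hga Himg].
  { intros y [t [Ht E]] [s [Hs E']]. rewrite <- E. apply Hin with (al s); [lra|congruence]. }
  destruct (proj2 (Himg (g a0))) as [t [Ht E]].
  { right; exists 0; split; [lra|]. destruct Hal as [A0 _]; congruence. }
  destruct (arc_dist_additive HC Hga Ht) as [L [s [D1 [D2 [D3 Hs]]]]].
  rewrite E in D2, D3. rewrite Hg in D3. rewrite D1, D2, D3. simpl. f_equal. ring.
Qed.

Lemma gate_exists c : (exists a0, fin_dist dC c (g a0)) -> exists p, gate c p.
Proof.
  intros [a0 Ha0].
  destruct (classic (exists a, c = g a)) as [[a ->]|NA]; [exists a; apply gate_image|].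
  assert (N : g a0 <> c) by (intros E; apply NA; exists a0; auto).
  destruct (forest_arc_exists HC (fin_dist_sym HmC _ _ Ha0) N) as [be Hbe].
  pose proof Hbe as [B0 [B1 [BS _]]].
  destruct (last_exit HmC (P := fun y => exists a, y = g a) (t0 := 1) (arc_continuous Hbe))
    as [s0 [Hs0 [[a Ea] Haft]]]; auto.
  - exact embedding_image_closed.
  - exists a0; auto.
  - lra.
  - rewrite B1; exact NA.
  - exists a. apply gate_of_arc with (be := fun t => be (s0 + t * (1 - s0))).
    + rewrite <- Ea. apply arc_in_change with (S := fin_dist dC (g a0)).
      * assert (Hs := arc_sub Hbe (proj1 Hs0) (proj2 Hs0) (Rle_refl 1)). rewrite B1 in Hs. exact Hs.
      * intros t Ht. apply (fin_dist_trans HmC) with (g a0).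
        -- apply (fin_dist_sym HmC), BS; lra.
        -- apply BS; nra.
    + intros t Ht a' Ea'. destruct (Req_dec t 0) as [->|T0].
      * rewrite Rmult_0_l, Rplus_0_r; auto.
      * exfalso. apply (Haft (s0 + t * (1 - s0))); [nra|]. eauto.
Qed.

Lemma gate_unique c p q : gate c p -> gate c q -> p = q.
Proof.
  intros [Cp Hp] [Cq Hq]. apply (edist_eq0 HmA).
  specialize (Hp q). specialize (Hq p). rewrite (edist_sym HmA q p) in Hq. unfold fin_dist in *.
  rewrite Hq in Hp. rbar_crunch.
Qed.

Lemma gate_segment c p y : gate c p -> Rbar_plus (dC (g p) y) (dC y c) = dC (g p) c -> gate y p.
Proof.
  intros [Cp Hp] Hs.
  assert (Cy : fin_dist dC y (g p)).
  { unfold fin_dist in *. rewrite (edist_sym HmC y), (edist_sym HmC c) in *.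
    rewrite <- Hs in Cp. rbar_crunch. }
  split; auto. intros a.
  assert (T1 := edist_triangle HmC y (g p) (g a)). assert (T2 := edist_triangle HmC c y (g a)).
  specialize (Hp a). rewrite Hg in T1.
  rewrite (edist_sym HmC (g p) y), (edist_sym HmC (g p) c), (edist_sym HmC y c) in Hs.
  unfold fin_dist in *. rewrite Hp in T2. apply Rbar_le_antisym; auto. rewrite <- Hs in T2. rbar_crunch.
Qed.

End Gate.

(* An abstract description of the amalgam of [B] and [C] over [A]; being symmetric in
   [B] and [C] (see [is_gluing_swap]), it halves the case analysis on arcs. *)
Record is_gluing (XA XB XC D : Type) (dB : XB -> XB -> Rbar) (dC : XC -> XC -> Rbar)
    (dD : D -> D -> Rbar) (f : XA -> XB) (g : XA -> XC) (iB : XB -> D) (iC : XC -> D) : Prop := {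
  glue_metric : ext_metric dD;
  glue_distB : forall x y, dD (iB x) (iB y) = dB x y;
  glue_distC : forall x y, dD (iC x) (iC y) = dC x y;
  glue_cover : forall z, (exists b, z = iB b) \/ (exists c, z = iC c);
  glue_common : forall a, iB (f a) = iC (g a);
  glue_common_only : forall b c, iB b = iC c -> exists a, b = f a /\ c = g a;
  glue_cross_le : forall b c a,
    Rbar_le (dD (iB b) (iC c)) (Rbar_plus (dB b (f a)) (dC (g a) c));
  glue_cross_attained : forall b c, Rbar_lt (dD (iB b) (iC c)) p_infty ->
    exists a, dD (iB b) (iC c) = Rbar_plus (dB b (f a)) (dC (g a) c)
}.

Lemma is_gluing_swap XA XB XC D dB dC dD (f : XA -> XB) (g : XA -> XC) (iB : XB -> D) iC :
  ext_metric dB -> ext_metric dC -> is_gluing dB dC dD f g iB iC -> is_gluing dC dB dD g f iC iB.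
Proof.
  intros HmB HmC [HD HiB HiC Hcov Hc1 Hc2 Hle Hatt]. split; auto.
  - intros z; destruct (Hcov z); auto.
  - intros c b E. destruct (Hc2 b c (eq_sym E)) as [a [Ea Ea']]. eauto.
  - intros c b a. rewrite (edist_sym HD), (edist_sym HmC), (edist_sym HmB), Rbar_plus_comm. auto.
  - intros c b H. rewrite (edist_sym HD) in *. destruct (Hatt _ _ H) as [a Ea]. exists a.
    rewrite Ea, (edist_sym HmC), (edist_sym HmB), Rbar_plus_comm. auto.
Qed.

Definition juxtapose (T : Type) (L : R) (p q : R -> T) (s : R) : T :=
  if Rle_dec s L then p s else q (s - L).

Lemma juxtapose_l T L (p q : R -> T) s : s <= L -> juxtapose L p q s = p s.
Proof. intros; unfold juxtapose; destruct Rle_dec; auto; lra. Qed.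

Lemma juxtapose_r T L (p q : R -> T) s : L < s -> juxtapose L p q s = q (s - L).
Proof. intros; unfold juxtapose; destruct Rle_dec; auto; lra. Qed.

Section GluingArcs.
Variables XA XB XC D : Type.
Variable dA : XA -> XA -> Rbar.
Variable dB : XB -> XB -> Rbar.
Variable dC : XC -> XC -> Rbar.
Variable dD : D -> D -> Rbar.
Variable f : XA -> XB.
Variable g : XA -> XC.
Variable iB : XB -> D.
Variable iC : XC -> D.
Hypothesis HA : is_Rforest dA.
Hypothesis HB : is_Rforest dB.
Hypothesis HC : is_Rforest dC.
Hypothesis Hf : forall x y, dB (f x) (f y) = dA x y.
Hypothesis Hg : forall x y, dC (g x) (g y) = dA x y.
Hypothesis HG : is_gluing dB dC dD f g iB iC.
Let HmA : ext_metric dA := forest_metric HA.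
Let HmB : ext_metric dB := forest_metric HB.
Let HmC : ext_metric dC := forest_metric HC.
Let HD : ext_metric dD := glue_metric HG.
Let HiB := glue_distB HG.
Let HiC := glue_distC HG.
Let Hcommon := glue_common HG.
Let Hattained := glue_cross_attained HG.
Let HA_ge0 x y : Rbar_le (Finite 0) (dA x y) := edist_ge0 HmA x y.
Let HB_ge0 x y : Rbar_le (Finite 0) (dB x y) := edist_ge0 HmB x y.
Let HC_ge0 x y : Rbar_le (Finite 0) (dC x y) := edist_ge0 HmC x y.
Let HD_ge0 x y : Rbar_le (Finite 0) (dD x y) := edist_ge0 HD x y.
Local Hint Resolve HA_ge0 HB_ge0 HC_ge0 HD_ge0 : rbar_nonneg.

Definition in_B z := exists b, z = iB b.

Lemma glue_dist_gate b c p : gate dA dC g c p -> dD (iB b) (iC c) = Rbar_plus (dB b (f p)) (dC (g p) c).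
Proof.
  intros [Cp Hp]. apply Rbar_le_antisym; [apply (glue_cross_le HG)|].
  destruct (classic (fin_dist dD (iB b) (iC c))) as [Fin|Inf].
  - destruct (Hattained _ _ Fin) as [a Ea]. rewrite Ea. specialize (Hp a).
    assert (T := edist_triangle HmB b (f a) (f p)). rewrite Hf in T.
    assert (S1 := edist_sym HmA p a). assert (S2 := edist_sym HmC c (g p)).
    assert (S3 := edist_sym HmC c (g a)). unfold fin_dist in Cp. rbar_crunch.
  - rewrite (fin_dist_infty HD _ _ Inf). destruct (Rbar_plus _ _); simpl; auto.
Qed.

Lemma glue_dist_far b c : ~ (exists a, fin_dist dC c (g a)) -> dD (iB b) (iC c) = p_infty.
Proof.
  intros N. apply (fin_dist_infty HD). intros Fin.
  destruct (Hattained _ _ Fin) as [a Ea]. apply N. exists a. unfold fin_dist in *.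
  rewrite Ea in Fin. rewrite (edist_sym HmC). rbar_crunch.
Qed.

Lemma glue_C_apart c : ~ (exists a, c = g a) ->
  exists eps, 0 < eps /\ forall b, Rbar_le (Finite eps) (dD (iB b) (iC c)).
Proof.
  intros NA. destruct (classic (exists a, fin_dist dC c (g a))) as [Ex|NEx].
  - destruct (gate_exists HA HC g Hg c Ex) as [p Hp].
    pose proof Hp as [Cp _]. destruct (fin_dist_real HmC _ _ Cp) as [r [Er Hr]].
    assert (0 < r) by (apply (edist_pos HmC) with c (g p); auto; intro; apply NA; eauto).
    exists r. split; auto. intros b. rewrite (glue_dist_gate b Hp), (edist_sym HmC), Er. rbar_crunch.
  - exists 1. split; [lra|]. intros b. rewrite glue_dist_far; simpl; auto.
Qed.

Lemma glue_not_B z : ~ in_B z -> exists c, z = iC c /\ ~ (exists a, c = g a).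
Proof.
  intros N. destruct (glue_cover HG z) as [[b E]|[c E]]; [exfalso; apply N; exists b; auto|].
  exists c; split; auto. intros [a Ea]. apply N. exists (f a). rewrite Hcommon. congruence.
Qed.

Lemma in_B_closed : metric_closed dD in_B.
Proof.
  intros y Hy. apply NNPP; intros N. destruct (glue_not_B N) as [c [-> NA]].
  destruct (glue_C_apart NA) as [eps [He Heps]].
  destruct (Hy eps He) as [z [[b ->] Hz]]. specialize (Heps b). rewrite (edist_sym HD) in Hz.
  rbar_crunch.
Qed.

Lemma glue_B_limit b : (forall eps, 0 < eps -> exists c, Rbar_lt (dD (iB b) (iC c)) (Finite eps)) ->
  exists a, b = f a.
Proof.
  intros H. apply (isometry_image_closed HmA HmB f Hf (forest_complete HA)).
  intros eps He. destruct (H eps He) as [c Hc].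
  assert (Fin : fin_dist dD (iB b) (iC c)) by (unfold fin_dist; rbar_crunch).
  destruct (Hattained _ _ Fin) as [a Ea]. exists (f a). split; eauto. rewrite Ea in Hc. rbar_crunch.
Qed.

Lemma arc_leaves_B ga t0 : path_continuous dD ga -> in_B (ga 0) -> 0 <= t0 <= 1 -> ~ in_B (ga t0) ->
  exists s1 a1, 0 <= s1 < t0 /\ ga s1 = iB (f a1) /\ forall s, s1 < s <= t0 -> ~ in_B (ga s).
Proof.
  intros Gc H0 Ht0 Nt0.
  destruct (last_exit HD Gc in_B_closed H0 Ht0 Nt0) as [s1 [Hs1 [[xb Exb] Hafter]]].
  destruct (@glue_B_limit xb) as [a1 ->].
  - intros eps He. destruct (Gc s1 ltac:(lra) eps He) as [del [Hd Hdd]].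
    set (s := Rmin (s1 + del / 2) t0).
    assert (s1 < s) by (unfold s; apply Rmin_glb_lt; lra).
    assert (s <= t0) by (unfold s; apply Rmin_r). assert (s <= s1 + del/2) by (unfold s; apply Rmin_l).
    destruct (glue_not_B (Hafter s ltac:(lra))) as [c [Ec _]]. exists c.
    specialize (Hdd s ltac:(lra) ltac:(apply Rabs_def1; lra)).
    rewrite Ec, Exb in Hdd. rewrite (edist_sym HD). auto.
  - exists s1, a1. auto.
Qed.

Lemma arc_excursion_C x u v ga s1 s2 c1 c2 : is_arc_in dD (fin_dist dD x) u v ga ->
  0 <= s1 -> s1 < s2 -> s2 <= 1 -> ga s1 = iC c1 -> ga s2 = iC c2 ->
  (forall s, s1 < s < s2 -> ~ in_B (ga s)) ->
  exists be, (forall t, 0 <= t <= 1 -> ga (s1 + t * (s2 - s1)) = iC (be t)) /\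
    is_arc_in dC (fin_dist dC c1) c1 c2 be.
Proof.
  intros Hga H1 H12 H2 E1 E2 Hout. pose proof Hga as [_ [_ [GS _]]].
  assert (Hsub := arc_sub Hga H1 H12 H2).
  assert (HinC : forall t, 0 <= t <= 1 -> exists c, ga (s1 + t * (s2 - s1)) = iC c).
  { intros t Ht. destruct (Req_dec t 0) as [->|T0]; [exists c1; rewrite Rmult_0_l, Rplus_0_r; auto|].
    destruct (Req_dec t 1) as [->|T1]; [exists c2; rewrite Rmult_1_l, Rplus_minus; auto|].
    destruct (glue_not_B (Hout (s1 + t * (s2 - s1)) ltac:(nra))) as [c [Ec _]]. eauto. }
  destruct (arc_isometry_pull dC iC HiC Hsub HinC) as [be [Hbe Hbarc]].
  assert (B0 : be 0 = c1).
  { apply (isometry_inj HmC HD iC HiC). rewrite <- Hbe by lra. rewrite Rmult_0_l, Rplus_0_r; auto. }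
  assert (B1 : be 1 = c2).
  { apply (isometry_inj HmC HD iC HiC). rewrite <- Hbe by lra. rewrite Rmult_1_l, Rplus_minus; auto. }
  rewrite B0, B1 in Hbarc. exists be. split; auto.
  apply arc_in_change with (S := fun _ => True); auto. intros t Ht.
  unfold fin_dist. rewrite <- HiC, <- E1, <- Hbe by auto.
  apply (fin_dist_trans HD) with x; [apply (fin_dist_sym HD)|]; apply GS; nra.
Qed.

Lemma arc_B_convex x b b' ga : is_arc_in dD (fin_dist dD x) (iB b) (iB b') ga ->
  forall t, 0 <= t <= 1 -> in_B (ga t).
Proof.
  intros Hga t0 Ht0. apply NNPP; intros N0. pose proof Hga as [G0 [G1 _]].
  destruct (arc_leaves_B (arc_continuous Hga) ltac:(exists b; auto) Ht0 N0)
    as [s1 [a1 [Hs1 [E1 Aft1]]]].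
  destruct (arc_leaves_B (t0 := 1 - t0) (arc_continuous (arc_rev Hga))) as [r1 [a2 [Hr1 [E2 Aft2]]]].
  { exists b'. cbv beta. rewrite Rminus_0_r; auto. }
  { lra. }
  { cbv beta. replace (1 - (1 - t0)) with t0 by ring. auto. }
  cbv beta in E2, Aft2. rewrite Hcommon in E1, E2.
  (* between its last point [g a1] and its next point [g a2] of A the arc runs in C,
     but A is convex in C *)
  assert (Hout : forall s, s1 < s < 1 - r1 -> ~ in_B (ga s)).
  { intros s Hs. destruct (Rle_dec s t0); [apply Aft1; lra|].
    assert (H := Aft2 (1 - s) ltac:(lra)). replace (1 - (1 - s)) with s in H by ring. auto. }
  destruct (arc_excursion_C Hga (proj1 Hs1) (ltac:(lra) : s1 < 1 - r1) ltac:(lra) E1 E2 Hout)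
    as [be [Hbe Hbc]].
  set (t := (t0 - s1) / (1 - r1 - s1)).
  assert (Ht : 0 <= t <= 1) by (apply ratio_in_unit; lra).
  destruct (embedding_image_convex HA HC g Hg _ _ Hbc Ht) as [a Ea].
  apply N0. exists (f a). rewrite Hcommon, <- Ea, <- Hbe by auto.
  unfold t. f_equal; field; lra.
Qed.

Lemma arc_B_pull x b b' ga : is_arc_in dD (fin_dist dD x) (iB b) (iB b') ga ->
  exists be, is_arc_in dB (fin_dist dB b) b b' be /\
    forall z, arc_image ga z <-> exists y, z = iB y /\ arc_image be y.
Proof.
  intros Hga. pose proof Hga as [G0 [G1 [GS _]]].
  destruct (arc_isometry_pull dB iB HiB Hga (arc_B_convex Hga)) as [be [Hbe Hbarc]].
  assert (B0 : be 0 = b) by (apply (isometry_inj HmB HD iB HiB); rewrite <- Hbe by lra; auto).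
  assert (B1 : be 1 = b') by (apply (isometry_inj HmB HD iB HiB); rewrite <- Hbe by lra; auto).
  rewrite B0, B1 in Hbarc. exists be. split.
  - apply arc_in_change with (S := fun _ => True); auto. intros t Ht.
    unfold fin_dist. rewrite <- HiB, <- B0, <- !Hbe by lra.
    apply (fin_dist_trans HD) with x; [apply (fin_dist_sym HD)|]; apply GS; lra.
  - intros z. rewrite (arc_image_ext _ _ z Hbe). apply arc_isometry_image.
Qed.

Lemma arc_BC_split x b c ga : is_arc_in dD (fin_dist dD x) (iB b) (iC c) ga ->
  ~ (exists a, b = f a) -> ~ (exists a, c = g a) ->
  exists p be1 be2, gate dA dC g c p /\ is_arc_in dB (fin_dist dB b) b (f p) be1 /\
    is_arc_in dC (fin_dist dC (g p)) (g p) c be2 /\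
    forall z, arc_image ga z <->
      (exists y, z = iB y /\ arc_image be1 y) \/ (exists y, z = iC y /\ arc_image be2 y).
Proof.
  intros Hga NB NC. pose proof Hga as [G0 [G1 _]].
  assert (N1 : ~ in_B (ga 1)).
  { rewrite G1. intros [y Ey]. destruct (glue_common_only HG _ _ (eq_sym Ey)) as [a [_ Ea]].
    apply NC; eauto. }
  destruct (arc_leaves_B (t0 := 1) (arc_continuous Hga) ltac:(exists b; auto) ltac:(lra) N1)
    as [s1 [a1 [Hs1 [E1 Aft1]]]].
  assert (Hs1p : 0 < s1).
  { destruct (proj1 Hs1) as [H|<-]; auto. rewrite G0 in E1.
    apply (isometry_inj HmB HD iB HiB) in E1. exfalso; apply NB; eauto. }
  assert (Hsub1 := arc_sub Hga (Rle_refl 0) Hs1p ltac:(lra)). rewrite G0, E1 in Hsub1.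
  destruct (arc_B_pull Hsub1) as [be1 [Hbe1 Himg1]].
  rewrite Hcommon in E1.
  destruct (arc_excursion_C Hga (proj1 Hs1) (proj2 Hs1) (Rle_refl 1) E1 G1)
    as [be2 [Hbe2 Hbc]]; [intros s Hs; apply Aft1; lra|].
  assert (Hgate : gate dA dC g c a1).
  { apply gate_of_arc with (be := be2); auto. intros t Ht a Ea.
    destruct (Req_dec t 0) as [->|T0]; [destruct Hbc as [B0 _]; congruence|].
    exfalso. apply (Aft1 (s1 + t * (1 - s1))); [nra|].
    exists (f a). rewrite Hcommon, <- Ea. apply Hbe2; auto. }
  exists a1, be1, be2. do 3 (split; auto).
  intros z. rewrite (arc_image_split ga z (conj Hs1p (proj2 Hs1))), Himg1.
  rewrite (arc_image_ext _ _ z Hbe2), arc_isometry_image. tauto.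
Qed.

Lemma BC_juxtapose_isom c p L1 L2 ps1 ps2 : gate dA dC g c p ->
  isom_on dB L1 ps1 -> ps1 L1 = f p -> isom_on dC L2 ps2 -> ps2 0 = g p -> ps2 L2 = c ->
  0 <= L1 -> 0 <= L2 ->
  isom_on dD (L1 + L2) (juxtapose L1 (fun s => iB (ps1 s)) (fun t => iC (ps2 t))).
Proof.
  intros Hp Pi1 P1L Pi2 P20 P2L HL1 HL2.
  assert (Gt : forall t, 0 <= t <= L2 -> gate dA dC g (ps2 t) p).
  { intros t Ht. apply (gate_segment HA HC Hg (c := c)); auto.
    rewrite <- P20, <- P2L, !Pi2 by lra. simpl. f_equal. unfold Rabs; repeat destruct Rcase_abs; lra. }
  assert (Cr : forall s t, 0 <= s <= L1 -> 0 <= t <= L2 ->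
            dD (iB (ps1 s)) (iC (ps2 t)) = Finite (L1 - s + t)).
  { intros s t Hs Ht. rewrite (glue_dist_gate (ps1 s) (Gt t Ht)), <- P1L, <- P20, Pi1, Pi2 by lra.
    simpl. f_equal. unfold Rabs; repeat destruct Rcase_abs; lra. }
  intros s t Hs Ht. destruct (Rle_dec s L1); destruct (Rle_dec t L1).
  - rewrite !juxtapose_l, HiB, Pi1 by lra; auto.
  - rewrite juxtapose_l, juxtapose_r, Cr by lra. f_equal. unfold Rabs; repeat destruct Rcase_abs; lra.
  - rewrite juxtapose_r, juxtapose_l, (edist_sym HD), Cr by lra.
    f_equal. unfold Rabs; repeat destruct Rcase_abs; lra.
  - rewrite !juxtapose_r, HiC, Pi2 by lra. f_equal. f_equal. ring.
Qed.

Lemma BC_geodesic b c p : gate dA dC g c p -> fin_dist dB b (f p) ->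
  exists L phi, 0 <= L /\ isom_on dD L phi /\ phi 0 = iB b /\ phi L = iC c /\
    forall be1 be2, is_arc_in dB (fin_dist dB b) b (f p) be1 ->
      is_arc_in dC (fin_dist dC (g p)) (g p) c be2 ->
      forall z, ((exists y, z = iB y /\ arc_image be1 y) \/ (exists y, z = iC y /\ arc_image be2 y)) <->
        exists s, 0 <= s <= L /\ phi s = z.
Proof.
  intros Hp Hbp. pose proof Hp as [Cp _].
  destruct (forest_geodesic HB b (f p) Hbp) as [L1 [ps1 [HL1 [_ [P10 [P1L [Pi1 [_ Pimg1]]]]]]]].
  destruct (forest_geodesic HC (g p) c (fin_dist_sym HmC _ _ Cp))
    as [L2 [ps2 [HL2 [_ [P20 [P2L [Pi2 [_ Pimg2]]]]]]]].
  exists (L1 + L2), (juxtapose L1 (fun s => iB (ps1 s)) (fun t => iC (ps2 t))).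
  split; [lra|]. split; [apply (BC_juxtapose_isom Hp); auto|].
  split; [rewrite juxtapose_l, P10 by lra; auto|]. split.
  { destruct (Req_dec L2 0) as [Z|Z].
    - rewrite Z, Rplus_0_r, juxtapose_l, P1L, Hcommon by lra. rewrite <- P2L, Z, P20. auto.
    - rewrite juxtapose_r, <- P2L by lra. f_equal; f_equal; ring. }
  intros be1 be2 Hbe1 Hbe2 z. split.
  - intros [[y [-> Hy]]|[y [-> Hy]]].
    + apply (Pimg1 be1 Hbe1) in Hy. destruct Hy as [s [Hs <-]].
      exists s. split; [lra|]. rewrite juxtapose_l by lra. auto.
    + apply (Pimg2 be2 Hbe2) in Hy. destruct Hy as [t [Ht <-]]. destruct (Req_dec t 0) as [->|Z].
      * exists L1. split; [lra|]. rewrite juxtapose_l, P1L, Hcommon, P20 by lra. auto.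
      * exists (L1 + t). split; [lra|]. rewrite juxtapose_r by lra. f_equal; f_equal; ring.
  - intros [s [Hs <-]]. destruct (Rle_dec s L1).
    + left. exists (ps1 s). rewrite juxtapose_l by lra. split; auto.
      apply (Pimg1 be1 Hbe1). exists s; split; auto; lra.
    + right. exists (ps2 (s - L1)). rewrite juxtapose_r by lra. split; auto.
      apply (Pimg2 be2 Hbe2). exists (s - L1); split; auto; lra.
Qed.

Lemma glue_cross_close b c eps : Rbar_lt (dD (iB b) (iC c)) (Finite eps) ->
  exists a, Rbar_lt (dB b (f a)) (Finite eps) /\ Rbar_lt (dC (g a) c) (Finite eps).
Proof.
  intros H. assert (Fin : fin_dist dD (iB b) (iC c)) by (unfold fin_dist; rbar_crunch).
  destruct (Hattained _ _ Fin) as [a Ea]. exists a. rewrite Ea in H. split; rbar_crunch.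
Qed.

Lemma glue_complete : complete_in dD (fun _ => True).
Proof.
  intros u _ Hcau. enough (exists z, converges_to dD u z) as [z Hz] by (exists z; auto).
  destruct (classic (exists N, forall n, (N <= n)%nat -> exists b, u n = iB b)) as [HBs|NBs].
  { exact (isometry_eventually_complete HmB HD iB HiB (forest_complete HB) Hcau HBs). }
  destruct (classic (exists N, forall n, (N <= n)%nat -> exists c, u n = iC c)) as [HCs|NCs].
  { exact (isometry_eventually_complete HmC HD iC HiC (forest_complete HC) Hcau HCs). }
  (* [u] visits both sides infinitely often, so it approaches the common part *)
  assert (HiA : forall x y, dD (iB (f x)) (iB (f y)) = dA x y) by (intros; rewrite HiB; auto).
  apply (isometry_approx_complete HmA HD (fun a => iB (f a)) HiA (forest_complete HA) Hcau).
  intros eps He. destruct (Hcau eps He) as [N HN]. exists N. intros n Hn.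
  destruct (glue_cover HG (u n)) as [[b Eb]|[c Ec]].
  - destruct (not_all_ex_not _ _ (fun H => NBs (ex_intro _ N H))) as [m Nm].
    apply imply_to_and in Nm as [Hm Nm]. destruct (glue_not_B Nm) as [c [Ec _]].
    specialize (HN n m Hn Hm). rewrite Eb, Ec in HN.
    destruct (glue_cross_close _ _ _ HN) as [a [Ha _]]. exists a. rewrite Eb, HiB. auto.
  - destruct (not_all_ex_not _ _ (fun H => NCs (ex_intro _ N H))) as [m Nm].
    apply imply_to_and in Nm as [Hm Nm].
    destruct (glue_cover HG (u m)) as [[b Eb]|[c' Ec']]; [|exfalso; apply Nm; eauto].
    specialize (HN n m Hn Hm). rewrite Eb, Ec, (edist_sym HD) in HN.
    destruct (glue_cross_close _ _ _ HN) as [a [_ Ha]].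
    exists a. rewrite Ec, Hcommon, HiC, (edist_sym HmC). auto.
Qed.

Lemma arc_BB_exists x b b' : fin_dist dD x (iB b) -> fin_dist dD x (iB b') -> b <> b' ->
  exists ga, is_arc_in dD (fin_dist dD x) (iB b) (iB b') ga.
Proof.
  intros C1 C2 N. assert (Cb : fin_dist dB b b').
  { unfold fin_dist. rewrite <- HiB.
    apply (fin_dist_trans HD) with x; auto. apply (fin_dist_sym HD); auto. }
  destruct (forest_arc_exists HB Cb N) as [be Hbe].
  exists (fun t => iB (be t)). apply (arc_isometry HmB HD iB HiB _ Hbe).
  intros t Ht. apply (fin_dist_trans HD) with (iB b); auto.
  unfold fin_dist. rewrite HiB. destruct Hbe as [_ [_ [HS _]]]. apply HS; auto.
Qed.

Lemma arc_BB_unique x b b' g1 g2 : is_arc_in dD (fin_dist dD x) (iB b) (iB b') g1 ->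
  is_arc_in dD (fin_dist dD x) (iB b) (iB b') g2 -> forall z, arc_image g1 z <-> arc_image g2 z.
Proof.
  intros H1 H2 z. destruct (arc_B_pull H1) as [be1 [Hb1 I1]]. destruct (arc_B_pull H2) as [be2 [Hb2 I2]].
  rewrite I1, I2. split; intros [y [Ey Hy]]; exists y; split; auto.
  - apply (forest_arc_unique HB Hb1 Hb2); auto.
  - apply (forest_arc_unique HB Hb2 Hb1); auto.
Qed.

Lemma arc_BB_isometric x b b' ga : is_arc_in dD (fin_dist dD x) (iB b) (iB b') ga ->
  isometric_to_interval dD (arc_image ga).
Proof.
  intros H. destruct (arc_B_pull H) as [be [Hb I]].
  destruct (forest_tree HB b) as [_ [_ [_ [_ Hiso]]]].
  destruct (Hiso _ _ _ Hb) as [L [phi [HL [Himg Hph]]]].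
  exists L, (fun s => iB (phi s)). split; auto. split.
  - intros z. rewrite I. split.
    + intros [y [-> Hy]]. apply Himg in Hy. destruct Hy as [s [Hs <-]]. eauto.
    + intros [s [Hs <-]]. exists (phi s). split; auto. apply Himg. eauto.
  - intros s t Hs Ht. rewrite HiB; auto.
Qed.

Lemma arc_BC_exists x b c : fin_dist dD x (iB b) -> fin_dist dD x (iC c) -> iB b <> iC c ->
  exists ga, is_arc_in dD (fin_dist dD x) (iB b) (iC c) ga.
Proof.
  intros C1 C2 N.
  assert (Cbc : fin_dist dD (iB b) (iC c))
    by (apply (fin_dist_trans HD) with x; auto; apply (fin_dist_sym HD); auto).
  destruct (Hattained _ _ Cbc) as [a Ea].
  assert (Ex : exists a, fin_dist dC c (g a)).
  { exists a. unfold fin_dist in *. rewrite Ea in Cbc. rewrite (edist_sym HmC). rbar_crunch. }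
  destruct (gate_exists HA HC g Hg c Ex) as [p Hp].
  assert (Cbp : fin_dist dB b (f p)).
  { unfold fin_dist in *. rewrite (glue_dist_gate b Hp) in Cbc. rbar_crunch. }
  destruct (BC_geodesic b Hp Cbp) as [L [phi [HL [Iso [P0 [PL _]]]]]].
  assert (HL' : 0 < L).
  { apply (edist_pos HD) with (iB b) (iC c); auto.
    rewrite <- P0, <- PL, Iso by lra. f_equal. rewrite Rminus_0_l, Rabs_Ropp, Rabs_right; lra. }
  exists (fun t => phi (t * L)). rewrite <- P0, <- PL. apply (isom_on_arc HD); auto.
  intros s Hs. apply (fin_dist_trans HD) with (iB b); auto.
  rewrite <- P0. unfold fin_dist. rewrite Iso by lra. simpl; auto.
Qed.

Lemma arc_BC_geodesic x b c ga : is_arc_in dD (fin_dist dD x) (iB b) (iC c) ga ->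
  ~ (exists a, b = f a) -> ~ (exists a, c = g a) ->
  exists p L phi, gate dA dC g c p /\ 0 <= L /\ isom_on dD L phi /\
    forall z, arc_image ga z <-> exists s, 0 <= s <= L /\ phi s = z.
Proof.
  intros H NB NC. destruct (arc_BC_split H NB NC) as [p [be1 [be2 [Hp [Hb1 [Hb2 Himg]]]]]].
  assert (Cbp : fin_dist dB b (f p)) by (destruct Hb1 as [_ [B1 [BS _]]]; rewrite <- B1; apply BS; lra).
  destruct (BC_geodesic b Hp Cbp) as [L [phi [HL [Iso [_ [_ Pimg]]]]]].
  exists p, L, phi. do 3 (split; auto). intros z. rewrite Himg. apply Pimg; auto.
Qed.

Lemma arc_BC_unique x b c g1 g2 : is_arc_in dD (fin_dist dD x) (iB b) (iC c) g1 ->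
  is_arc_in dD (fin_dist dD x) (iB b) (iC c) g2 ->
  ~ (exists a, b = f a) -> ~ (exists a, c = g a) ->
  forall z, arc_image g1 z <-> arc_image g2 z.
Proof.
  intros H1 H2 NB NC. destruct (arc_BC_split H1 NB NC) as [p [be1 [be2 [Hp [Hb1 [Hb2 Himg]]]]]].
  destruct (arc_BC_split H2 NB NC) as [q [be1' [be2' [Hq [Hb1' [Hb2' Himg']]]]]].
  assert (p = q) by (apply (gate_unique HA HC Hp Hq)). subst q.
  assert (Cbp : fin_dist dB b (f p)) by (destruct Hb1 as [_ [B1 [BS _]]]; rewrite <- B1; apply BS; lra).
  destruct (BC_geodesic b Hp Cbp) as [L [phi [HL [Iso [_ [_ Pimg]]]]]].
  intros z. rewrite Himg, Himg', (Pimg be1 be2 Hb1 Hb2), (Pimg be1' be2' Hb1' Hb2'). tauto.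
Qed.

End GluingArcs.

Section GluingForest.
Variables XA XB XC D : Type.
Variable dA : XA -> XA -> Rbar.
Variable dB : XB -> XB -> Rbar.
Variable dC : XC -> XC -> Rbar.
Variable dD : D -> D -> Rbar.
Variable f : XA -> XB.
Variable g : XA -> XC.
Variable iB : XB -> D.
Variable iC : XC -> D.
Hypothesis HA : is_Rforest dA.
Hypothesis HB : is_Rforest dB.
Hypothesis HC : is_Rforest dC.
Hypothesis Hf : forall x y, dB (f x) (f y) = dA x y.
Hypothesis Hg : forall x y, dC (g x) (g y) = dA x y.
Hypothesis HG : is_gluing dB dC dD f g iB iC.
Let HD : ext_metric dD := glue_metric HG.
Let HG' : is_gluing dC dB dD g f iC iB := is_gluing_swap (forest_metric HB) (forest_metric HC) HG.

Lemma glue_pair_cases u v :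
  (exists b b', u = iB b /\ v = iB b') \/ (exists c c', u = iC c /\ v = iC c') \/
  (exists b c, u = iB b /\ v = iC c /\ ~ (exists a, b = f a) /\ ~ (exists a, c = g a)) \/
  (exists b c, u = iC c /\ v = iB b /\ ~ (exists a, b = f a) /\ ~ (exists a, c = g a)).
Proof.
  pose proof (glue_common HG) as Hcommon.
  destruct (glue_cover HG u) as [[b ->]|[c ->]]; destruct (glue_cover HG v) as [[b' ->]|[c' ->]].
  - left; eauto.
  - destruct (classic (exists a, c' = g a)) as [[a ->]|N2]; [left; exists b, (f a); auto|].
    destruct (classic (exists a, b = f a)) as [[a ->]|N1]; [right; left; exists (g a), c'; auto|].
    right; right; left. exists b, c'. auto.
  - destruct (classic (exists a, c = g a)) as [[a ->]|N2]; [left; exists (f a), b'; auto|].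
    destruct (classic (exists a, b' = f a)) as [[a ->]|N1]; [right; left; exists c, (g a); auto|].
    right; right; right. exists b', c. auto.
  - right; left; eauto.
Qed.

Lemma glue_arc_exists x u v : fin_dist dD x u -> fin_dist dD x v -> u <> v ->
  exists ga, is_arc_in dD (fin_dist dD x) u v ga.
Proof.
  intros Hu Hv N.
  destruct (glue_pair_cases u v)
    as [[b [b' [-> ->]]]|[[c [c' [-> ->]]]|[[b [c [-> [-> _]]]]|[b [c [-> [-> _]]]]]]].
  - apply (arc_BB_exists HB HG x Hu Hv). intros ->; auto.
  - apply (arc_BB_exists HC HG' x Hu Hv). intros ->; auto.
  - apply (arc_BC_exists HA HB HC Hf Hg HG x b c Hu Hv N).
  - destruct (arc_BC_exists HA HB HC Hf Hg HG x b c Hv Hu (not_eq_sym N)) as [ga Hga].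
    exists (fun t => ga (1 - t)). apply arc_rev; auto.
Qed.

Lemma glue_arc_unique x u v g1 g2 : is_arc_in dD (fin_dist dD x) u v g1 ->
  is_arc_in dD (fin_dist dD x) u v g2 -> forall z, arc_image g1 z <-> arc_image g2 z.
Proof.
  intros H1 H2.
  destruct (glue_pair_cases u v)
    as [[b [b' [-> ->]]]|[[c [c' [-> ->]]]|[[b [c [-> [-> [N1 N2]]]]]|[b [c [-> [-> [N1 N2]]]]]]]].
  - apply (arc_BB_unique HA HB HC Hf Hg HG b b' H1 H2).
  - apply (arc_BB_unique HA HC HB Hg Hf HG' c c' H1 H2).
  - apply (arc_BC_unique HA HB HC Hf Hg HG H1 H2 N1 N2).
  - intros z. rewrite <- (arc_rev_image g1), <- (arc_rev_image g2).
    apply (arc_BC_unique HA HB HC Hf Hg HG (arc_rev H1) (arc_rev H2) N1 N2).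
Qed.

Lemma glue_arc_isometric x u v ga : is_arc_in dD (fin_dist dD x) u v ga ->
  isometric_to_interval dD (arc_image ga).
Proof.
  intros H.
  destruct (glue_pair_cases u v)
    as [[b [b' [-> ->]]]|[[c [c' [-> ->]]]|[[b [c [-> [-> [N1 N2]]]]]|[b [c [-> [-> [N1 N2]]]]]]]].
  - apply (arc_BB_isometric HA HB HC Hf Hg HG b b' H).
  - apply (arc_BB_isometric HA HC HB Hg Hf HG' c c' H).
  - destruct (arc_BC_geodesic HA HB HC Hf Hg HG H N1 N2) as [p [L [phi [_ [HL [Iso Himg]]]]]].
    exists L, phi. auto.
  - destruct (arc_BC_geodesic HA HB HC Hf Hg HG (arc_rev H) N1 N2) as [p [L [phi [_ [HL [Iso Himg]]]]]].
    exists L, phi. split; auto. split; auto. intros y. rewrite <- Himg. symmetry. apply arc_rev_image.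
Qed.

Theorem gluing_forest : is_Rforest dD.
Proof.
  pose proof (glue_complete HA HB HC Hf HG) as Hcomp.
  split; [exact HD|]. split; [exact Hcomp|]. intros x. split; [|split; [|split; [|split]]].
  - intros y z Hy Hz.
    destruct (fin_dist_real HD _ _ (fin_dist_trans HD _ _ _ (fin_dist_sym HD _ _ Hy) Hz)) as [r [E _]].
    eauto.
  - apply (fin_dist_complete HD). exact Hcomp.
  - intros u v Hu Hv N. apply glue_arc_exists; auto.
  - intros u v g1 g2 H1 H2. apply glue_arc_unique with x u v; auto.
  - intros u v ga H. apply glue_arc_isometric with x u v; auto.
Qed.

End GluingForest.

Section PredExtension.
Variable X : Type.
Variable d : X -> X -> Rbar.
Hypothesis Hm : ext_metric d.
Let Hd_ge0 x y : Rbar_le (Finite 0) (d x y) := edist_ge0 Hm x y.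
Local Hint Resolve Hd_ge0 : rbar_nonneg.
Variable K : X -> X -> R -> Prop.
Hypothesis K_range : forall s t r, K s t r -> 0 <= r <= 1.
Hypothesis K_diag : forall u, exists r, K u u r.
Hypothesis K_lip : forall s t r s' t' r' z, K s t r -> K s' t' r' ->
  Rbar_plus (d s s') (d t t') = Finite z -> r <= r' + z.

Definition clip (r : R) (e : Rbar) : R :=
  match e with Finite z => Rmin 1 (r + z) | _ => 1 end.

Lemma clip_le r e e' z : 0 <= z -> Rbar_le (Finite 0) e -> Rbar_le (Finite 0) e' ->
  Rbar_le e' (Rbar_plus (Finite z) e) -> clip r e' <= clip r e + z.
Proof.
  intros Hz He He' H. destruct e as [w| |], e' as [w'| |]; simpl in *; try contradiction; try lra.
  - unfold Rmin; repeat destruct Rle_dec; lra.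
  - assert (Rmin 1 (r + w') <= 1) by apply Rmin_l. lra.
Qed.

Definition ext_candidate u v y :=
  exists s t r, K s t r /\ y = clip r (Rbar_plus (d u s) (d v t)).

Lemma ext_candidate_range u v y : ext_candidate u v y -> 0 <= y <= 1.
Proof.
  intros [s [t [r [Kr ->]]]]. apply K_range in Kr.
  assert (H1 := Hd_ge0 u s). assert (H2 := Hd_ge0 v t).
  destruct (d u s) as [x| |], (d v t) as [x'| |]; simpl in *; try contradiction; try lra.
  split; [apply Rmin_glb; lra | apply Rmin_l].
Qed.

Lemma ext_candidate_bound u v : bound (fun w => ext_candidate u v (- w)).
Proof. exists 0. intros w H. apply ext_candidate_range in H. lra. Qed.

Lemma ext_candidate_exists u v : exists w, ext_candidate u v (- w).
Proof.
  destruct (K_diag u) as [r Kr]. exists (- clip r (Rbar_plus (d u u) (d v u))).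
  exists u, u, r. split; auto. ring.
Qed.

(* The infimum of the candidates, computed as minus the supremum of their opposites. *)
Definition ext_pred u v : R :=
  - proj1_sig (completeness _ (ext_candidate_bound u v) (ext_candidate_exists u v)).

Lemma ext_pred_le u v y : ext_candidate u v y -> ext_pred u v <= y.
Proof.
  intros H. unfold ext_pred. destruct completeness as [l [Hub Hlub]]. simpl.
  assert (- y <= l) by (apply Hub; rewrite Ropp_involutive; auto). lra.
Qed.

Lemma ext_pred_glb u v m : (forall y, ext_candidate u v y -> m <= y) -> m <= ext_pred u v.
Proof.
  intros H. unfold ext_pred. destruct completeness as [l [Hub Hlub]]. simpl.
  assert (l <= - m); [|lra]. apply Hlub. intros w Hw. apply H in Hw. lra.
Qed.

Lemma ext_pred_range u v : 0 <= ext_pred u v <= 1.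
Proof.
  split.
  - apply ext_pred_glb. intros y Hy. apply ext_candidate_range in Hy; lra.
  - destruct (ext_candidate_exists u v) as [w Hw].
    assert (H := ext_pred_le Hw). apply ext_candidate_range in Hw. lra.
Qed.

Lemma ext_pred_known u v r : K u v r -> ext_pred u v = r.
Proof.
  intros Kr. assert (Hr := K_range Kr). apply Rle_antisym.
  - apply ext_pred_le. exists u, v, r. split; auto.
    rewrite !(edist_refl Hm). simpl. unfold Rmin; destruct Rle_dec; lra.
  - apply ext_pred_glb. intros y [s [t [r' [Kr' ->]]]].
    destruct (Rbar_plus (d u s) (d v t)) as [z| |] eqn:Ez; simpl; try lra.
    apply Rmin_glb; [lra|]. apply (K_lip Kr Kr' Ez).
Qed.

Lemma ext_pred_move u u' v v' z1 z2 : d u u' = Finite z1 -> d v v' = Finite z2 ->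
  ext_pred u' v' <= ext_pred u v + (z1 + z2).
Proof.
  intros E1 E2.
  assert (Hz : 0 <= z1 + z2) by (generalize (Hd_ge0 u u') (Hd_ge0 v v'); rewrite E1, E2; simpl; lra).
  assert (ext_pred u' v' - (z1 + z2) <= ext_pred u v); [|lra].
  apply ext_pred_glb. intros y [s [t [r [Kr ->]]]].
  assert (H : ext_pred u' v' <= clip r (Rbar_plus (d u' s) (d v' t)))
    by (apply ext_pred_le; exists s, t, r; auto).
  assert (clip r (Rbar_plus (d u' s) (d v' t)) <=
          clip r (Rbar_plus (d u s) (d v t)) + (z1 + z2)); [|lra].
  assert (T1 := edist_triangle Hm u' u s). assert (T2 := edist_triangle Hm v' v t).
  rewrite (edist_sym Hm u' u), E1 in T1. rewrite (edist_sym Hm v' v), E2 in T2.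
  apply clip_le; [lra|..]; rbar_crunch.
Qed.

Lemma ext_pred_lip : one_one_lipschitz d ext_pred.
Proof.
  assert (R0 := edist_refl Hm).
  split; [exact ext_pred_range|]. split; intros a x y.
  all: generalize (Hd_ge0 x y); destruct (d x y) as [z| |] eqn:E; simpl; auto; intros _.
  all: assert (E' : d y x = Finite z) by (rewrite (edist_sym Hm); auto); apply Rabs_le.
  - assert (H1 := ext_pred_move (R0 a) E). assert (H2 := ext_pred_move (R0 a) E'). split; lra.
  - assert (H1 := ext_pred_move E (R0 a)). assert (H2 := ext_pred_move E' (R0 a)). split; lra.
Qed.

End PredExtension.

Lemma one_one_lipschitz_both {X} {d : X -> X -> Rbar} {P x y x' y' z1 z2} :
  one_one_lipschitz d P -> d x x' = Finite z1 -> d y y' = Finite z2 -> P x y <= P x' y' + z1 + z2.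
Proof.
  intros [_ [H2 H3]] E1 E2.
  specialize (H3 y x x'). specialize (H2 x' y y'). rewrite E1 in H3. rewrite E2 in H2. simpl in *.
  apply Rabs_le_between in H3. apply Rabs_le_between in H2. lra.
Qed.

Section Amalgam.
Variables A B C : RFRmodel.
Variable f : A -> B.
Variable g : A -> C.
Hypothesis Hf : embedding A B f.
Hypothesis Hg : embedding A C g.

Local Notation dA := (mdist A).
Local Notation dB := (mdist B).
Local Notation dC := (mdist C).
Let HA : is_Rforest dA := m_forest A.
Let HB : is_Rforest dB := m_forest B.
Let HC : is_Rforest dC := m_forest C.
Let HmA : ext_metric dA := forest_metric HA.
Let HmB : ext_metric dB := forest_metric HB.
Let HmC : ext_metric dC := forest_metric HC.
Let HA_ge0 x y : Rbar_le (Finite 0) (dA x y) := edist_ge0 HmA x y.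
Let HB_ge0 x y : Rbar_le (Finite 0) (dB x y) := edist_ge0 HmB x y.
Let HC_ge0 x y : Rbar_le (Finite 0) (dC x y) := edist_ge0 HmC x y.
Local Hint Resolve HA_ge0 HB_ge0 HC_ge0 : rbar_nonneg.
Let Hfd : forall x y, dB (f x) (f y) = dA x y := proj1 Hf.
Let Hgd : forall x y, dC (g x) (g y) = dA x y := proj1 Hg.

Definition glued := (B + {c : C | ~ exists a, c = g a})%type.

Definition cross_dist (b : B) (c : C) : Rbar :=
  match excluded_middle_informative (exists p, gate dA dC g c p) with
  | left H => let p := proj1_sig (constructive_indefinite_description _ H) in
              Rbar_plus (dB b (f p)) (dC (g p) c)
  | right _ => p_infty
  end.

Definition glued_dist (x y : glued) : Rbar :=
  match x, y with
  | inl b, inl b' => dB b b'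
  | inr c, inr c' => dC (proj1_sig c) (proj1_sig c')
  | inl b, inr c => cross_dist b (proj1_sig c)
  | inr c, inl b => cross_dist b (proj1_sig c)
  end.

Definition glued_inC (c : C) : glued :=
  match excluded_middle_informative (exists a, c = g a) with
  | left H => inl (f (proj1_sig (constructive_indefinite_description _ H)))
  | right H => inr (exist _ c H)
  end.

Lemma glued_inC_common a : glued_inC (g a) = inl (f a).
Proof.
  unfold glued_inC. destruct excluded_middle_informative as [H|H]; [|exfalso; apply H; eauto].
  destruct constructive_indefinite_description as [a' Ea']; simpl.
  apply (isometry_inj HmA HmC g Hgd) in Ea'. subst; auto.
Qed.

Lemma glued_inC_new c (H : ~ exists a, c = g a) : glued_inC c = inr (exist _ c H).
Proof.
  unfold glued_inC. destruct excluded_middle_informative as [H'|H']; [contradiction|].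
  f_equal. f_equal. apply proof_irrelevance.
Qed.

Lemma cross_dist_gate b c p : gate dA dC g c p -> cross_dist b c = Rbar_plus (dB b (f p)) (dC (g p) c).
Proof.
  intros Hp. unfold cross_dist.
  destruct excluded_middle_informative as [H|H]; [|exfalso; apply H; eauto].
  destruct constructive_indefinite_description as [q Hq]; simpl.
  rewrite (gate_unique HA HC Hq Hp). auto.
Qed.

Lemma cross_dist_nogate b c : ~ (exists p, gate dA dC g c p) -> cross_dist b c = p_infty.
Proof. intros N. unfold cross_dist. destruct excluded_middle_informative; auto. contradiction. Qed.

Lemma cross_dist_ge0 b c : Rbar_le (Finite 0) (cross_dist b c).
Proof.
  destruct (classic (exists p, gate dA dC g c p)) as [[p Hp]|N].
  - rewrite (cross_dist_gate b Hp). assert (H1 := HB_ge0 b (f p)). assert (H2 := HC_ge0 (g p) c).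
    rbar_crunch.
  - rewrite cross_dist_nogate; simpl; auto.
Qed.
Local Hint Resolve cross_dist_ge0 : rbar_nonneg.

Lemma no_gate_far c a : ~ (exists p, gate dA dC g c p) -> dC (g a) c = p_infty.
Proof.
  intros N. apply (fin_dist_infty HmC). intros Ha. apply N.
  apply (gate_exists HA HC g Hgd c). exists a. apply (fin_dist_sym HmC); auto.
Qed.

Lemma cross_dist_common a c : cross_dist (f a) c = dC (g a) c.
Proof.
  destruct (classic (exists p, gate dA dC g c p)) as [[p Hp]|N].
  - rewrite (cross_dist_gate _ Hp). destruct Hp as [Cp Hp]. specialize (Hp a). rewrite Hfd.
    rewrite (edist_sym HmC (g a)), Hp, (edist_sym HmC (g p)), Rbar_plus_comm.
    f_equal; apply (edist_sym HmA).
  - rewrite cross_dist_nogate, (no_gate_far a N); auto.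
Qed.

Lemma cross_dist_le_B b b' c : Rbar_le (cross_dist b c) (Rbar_plus (dB b b') (cross_dist b' c)).
Proof.
  destruct (classic (exists p, gate dA dC g c p)) as [[p Hp]|N].
  - rewrite !(cross_dist_gate _ Hp). assert (T := edist_triangle HmB b b' (f p)). rbar_crunch.
  - rewrite !cross_dist_nogate by auto. rbar_crunch.
Qed.

Lemma dist_B_le_cross b b' c : Rbar_le (dB b b') (Rbar_plus (cross_dist b c) (cross_dist b' c)).
Proof.
  destruct (classic (exists p, gate dA dC g c p)) as [[p Hp]|N].
  - rewrite !(cross_dist_gate _ Hp). assert (T := edist_triangle HmB b (f p) b').
    rewrite (edist_sym HmB (f p) b') in T. rbar_crunch.
  - rewrite !cross_dist_nogate by auto. rbar_crunch.
Qed.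

Lemma cross_dist_le_C b c c' : Rbar_le (cross_dist b c') (Rbar_plus (cross_dist b c) (dC c c')).
Proof.
  destruct (classic (exists p, gate dA dC g c p)) as [[p Hp]|N].
  2:{ rewrite (cross_dist_nogate b N). rbar_crunch. }
  destruct (classic (exists p, gate dA dC g c' p)) as [[p' Hp']|N'].
  - rewrite (cross_dist_gate _ Hp), (cross_dist_gate _ Hp').
    destruct Hp' as [Cp' Hp']. specialize (Hp' p).
    assert (T1 := edist_triangle HmB b (f p) (f p')). rewrite Hfd in T1.
    assert (T2 := edist_triangle HmC (g p) c c'). assert (S1 := edist_sym HmC c' (g p)).
    assert (S2 := edist_sym HmC c' (g p')). assert (S3 := edist_sym HmA p p').
    unfold fin_dist in Cp'. rbar_crunch.
  - rewrite (cross_dist_nogate b N'). destruct Hp as [Cp _].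
    assert (T := edist_triangle HmC (g p) c c'). rewrite (no_gate_far p N') in T.
    unfold fin_dist in Cp. rewrite (edist_sym HmC) in Cp. rbar_crunch.
Qed.

Lemma dist_C_le_cross b c c' : Rbar_le (dC c c') (Rbar_plus (cross_dist b c) (cross_dist b c')).
Proof.
  destruct (classic (exists p, gate dA dC g c p)) as [[p Hp]|N].
  2:{ rewrite (cross_dist_nogate b N). rbar_crunch. }
  destruct (classic (exists p, gate dA dC g c' p)) as [[p' Hp']|N'].
  2:{ rewrite (cross_dist_nogate b N'). rbar_crunch. }
  rewrite (cross_dist_gate _ Hp), (cross_dist_gate _ Hp').
  assert (T1 := edist_triangle HmC c (g p) c'). assert (T2 := edist_triangle HmC (g p) (g p') c').
  rewrite Hgd in T2. assert (T3 := edist_triangle HmB (f p) b (f p')). rewrite Hfd in T3.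
  assert (S1 := edist_sym HmB (f p) b). assert (S2 := edist_sym HmC c (g p)). rbar_crunch.
Qed.

Lemma glued_dist_sym x y : glued_dist x y = glued_dist y x.
Proof. destruct x, y; simpl; auto; apply edist_sym; auto. Qed.

Lemma glued_dist_ge0 x y : Rbar_le (Finite 0) (glued_dist x y).
Proof. destruct x, y; cbn [glued_dist]; auto with rbar_nonneg. Qed.

Lemma cross_dist_neq0 b c : ~ (exists a, c = g a) -> cross_dist b c <> Finite 0.
Proof.
  intros NA E. destruct (classic (exists p, gate dA dC g c p)) as [[p Hp]|N].
  - rewrite (cross_dist_gate _ Hp) in E. apply NA. exists p.
    apply (edist_eq0 HmC). rewrite (edist_sym HmC). rbar_crunch.
  - rewrite cross_dist_nogate in E by auto. discriminate.
Qed.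

Lemma glued_metric : ext_metric glued_dist.
Proof.
  split; [exact glued_dist_ge0|]. split; [|split; [|split; [exact glued_dist_sym|]]].
  - intros [b|c]; simpl; apply edist_refl; auto.
  - intros [b|[c Hc]] [b'|[c' Hc']]; cbn [glued_dist proj1_sig]; intros E.
    + f_equal; apply (edist_eq0 HmB); auto.
    + exfalso; exact (cross_dist_neq0 b Hc' E).
    + exfalso; exact (cross_dist_neq0 b' Hc E).
    + apply (edist_eq0 HmC) in E. subst c'. f_equal. f_equal. apply proof_irrelevance.
  - intros [b|[c Hc]] [b'|[c' Hc']] [b''|[c'' Hc'']]; cbn [glued_dist proj1_sig].
    + apply edist_triangle; auto.
    + apply cross_dist_le_B.
    + apply dist_B_le_cross.
    + apply cross_dist_le_C.
    + rewrite Rbar_plus_comm, (edist_sym HmB). apply cross_dist_le_B.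
    + apply dist_C_le_cross.
    + assert (H := cross_dist_le_C b'' c' c). rewrite (edist_sym HmC) in H. rewrite Rbar_plus_comm. auto.
    + apply edist_triangle; auto.
Qed.

Lemma glued_distC x y : glued_dist (glued_inC x) (glued_inC y) = dC x y.
Proof.
  destruct (classic (exists a, x = g a)) as [[a ->]|Na];
    destruct (classic (exists a, y = g a)) as [[a' ->]|Na'].
  - rewrite !glued_inC_common. simpl. rewrite Hfd, Hgd; auto.
  - rewrite glued_inC_common, (glued_inC_new Na'). apply cross_dist_common.
  - rewrite (glued_inC_new Na), glued_inC_common. simpl.
    rewrite cross_dist_common. apply edist_sym; auto.
  - rewrite (glued_inC_new Na), (glued_inC_new Na'). reflexivity.
Qed.

Lemma glued_dist_BC b c : glued_dist (inl b) (glued_inC c) = cross_dist b c.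
Proof.
  destruct (classic (exists a, c = g a)) as [[a ->]|Na].
  - rewrite glued_inC_common. simpl.
    rewrite (cross_dist_gate _ (gate_image HA HC g Hgd a)), (edist_refl HmC).
    rbar_crunch.
  - rewrite (glued_inC_new Na). reflexivity.
Qed.

Lemma glued_is_gluing : is_gluing dB dC glued_dist f g inl glued_inC.
Proof.
  split.
  - exact glued_metric.
  - reflexivity.
  - exact glued_distC.
  - intros [b|[c Hc]]; [left; eauto|right; exists c; rewrite (glued_inC_new Hc); auto].
  - intros a. rewrite glued_inC_common; auto.
  - intros b c E. destruct (classic (exists a, c = g a)) as [[a ->]|Na].
    + rewrite glued_inC_common in E. injection E as ->. eauto.
    + rewrite (glued_inC_new Na) in E. discriminate.
  - intros b c a. rewrite glued_dist_BC.
    destruct (classic (exists p, gate dA dC g c p)) as [[p Hp]|N].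
    + rewrite (cross_dist_gate _ Hp). destruct Hp as [Cp Hp]. specialize (Hp a).
      assert (T := edist_triangle HmB b (f a) (f p)). rewrite Hfd in T.
      assert (S1 := edist_sym HmC c (g a)). assert (S2 := edist_sym HmC c (g p)).
      assert (S3 := edist_sym HmA a p). rbar_crunch.
    + rewrite cross_dist_nogate, (no_gate_far a N) by auto. rbar_crunch.
  - intros b c. rewrite glued_dist_BC. intros H.
    destruct (classic (exists p, gate dA dC g c p)) as [[p Hp]|N].
    + exists p. apply cross_dist_gate; auto.
    + rewrite cross_dist_nogate in H by auto. contradiction.
Qed.

Local Notation RA := (mpred A).
Local Notation RB := (mpred B).
Local Notation RC := (mpred C).
Let Hfp : forall x y, RB (f x) (f y) = RA x y := proj2 Hf.
Let Hgp : forall x y, RC (g x) (g y) = RA x y := proj2 Hg.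

Definition glued_known (s t : glued) (r : R) :=
  (exists b b', s = inl b /\ t = inl b' /\ r = RB b b') \/
  (exists c c', s = glued_inC c /\ t = glued_inC c' /\ r = RC c c').

Lemma pred_cross_lip {b1 b2 c1 c2 x y} :
  glued_dist (inl b1) (glued_inC c1) = Finite x -> glued_dist (inl b2) (glued_inC c2) = Finite y ->
  RB b1 b2 <= RC c1 c2 + (x + y) /\ RC c1 c2 <= RB b1 b2 + (x + y).
Proof.
  intros Ex Ey. pose proof (glue_cross_attained glued_is_gluing) as Hatt.
  destruct (Hatt b1 c1) as [a1 Ea1]; [rewrite Ex; simpl; auto|].
  destruct (Hatt b2 c2) as [a2 Ea2]; [rewrite Ey; simpl; auto|].
  rewrite Ex in Ea1. rewrite Ey in Ea2. symmetry in Ea1, Ea2.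
  destruct (Rbar_plus_finite Ea1 (HB_ge0 _ _) (HC_ge0 _ _)) as [x1 [x2 [X1 [X2 [-> _]]]]].
  destruct (Rbar_plus_finite Ea2 (HB_ge0 _ _) (HC_ge0 _ _)) as [y1 [y2 [Y1 [Y2 [-> _]]]]].
  assert (X1' : dB (f a1) b1 = Finite x1) by (rewrite (edist_sym HmB); auto).
  assert (Y1' : dB (f a2) b2 = Finite y1) by (rewrite (edist_sym HmB); auto).
  assert (X2' : dC c1 (g a1) = Finite x2) by (rewrite (edist_sym HmC); auto).
  assert (Y2' : dC c2 (g a2) = Finite y2) by (rewrite (edist_sym HmC); auto).
  assert (L1 := one_one_lipschitz_both (m_lip B) X1 Y1).
  assert (L2 := one_one_lipschitz_both (m_lip C) X2 Y2).
  assert (L3 := one_one_lipschitz_both (m_lip B) X1' Y1').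
  assert (L4 := one_one_lipschitz_both (m_lip C) X2' Y2').
  rewrite Hfp in L1, L3. rewrite Hgp in L2, L4. split; lra.
Qed.

Lemma glued_known_lip s t r s' t' r' z : glued_known s t r -> glued_known s' t' r' ->
  Rbar_plus (glued_dist s s') (glued_dist t t') = Finite z -> r <= r' + z.
Proof.
  intros K K' E.
  destruct (Rbar_plus_finite E (glued_dist_ge0 _ _) (glued_dist_ge0 _ _)) as [x [y [Ex [Ey [-> _]]]]].
  destruct K as [[b1 [b2 [-> [-> ->]]]]|[c1 [c2 [-> [-> ->]]]]];
    destruct K' as [[b1' [b2' [-> [-> ->]]]]|[c1' [c2' [-> [-> ->]]]]].
  - assert (H := one_one_lipschitz_both (m_lip B) Ex Ey). lra.
  - apply (pred_cross_lip Ex Ey).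
  - rewrite glued_dist_sym in Ex, Ey. apply (pred_cross_lip Ex Ey).
  - rewrite glued_distC in Ex, Ey. assert (H := one_one_lipschitz_both (m_lip C) Ex Ey). lra.
Qed.

Lemma glued_known_range s t r : glued_known s t r -> 0 <= r <= 1.
Proof. intros [[b [b' [_ [_ ->]]]]|[c [c' [_ [_ ->]]]]]; [apply (m_lip B)|apply (m_lip C)]. Qed.

Lemma glued_known_diag u : exists r, glued_known u u r.
Proof.
  destruct (glue_cover glued_is_gluing u) as [[b ->]|[c ->]].
  - exists (RB b b). left. exists b, b. auto.
  - exists (RC c c). right. exists c, c. auto.
Qed.

Definition glued_pred : glued -> glued -> R :=
  ext_pred glued_metric glued_known glued_known_range glued_known_diag.

Definition glued_model : RFRmodel := {|
  carrier := glued;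
  mdist := glued_dist;
  mpred := glued_pred;
  m_forest := gluing_forest HA HB HC Hfd Hgd glued_is_gluing;
  m_lip := ext_pred_lip glued_metric glued_known glued_known_range glued_known_diag
|}.

Lemma amalgamation : exists (D : RFRmodel) (f' : B -> D) (g' : C -> D),
  embedding B D f' /\ embedding C D g' /\ forall a, f' (f a) = g' (g a).
Proof.
  exists glued_model, inl, glued_inC. split; [|split].
  - split; [reflexivity|]. intros x y. apply (ext_pred_known _ _ _ _ glued_known_lip).
    left. exists x, y. auto.
  - split; [exact glued_distC|]. intros x y. apply (ext_pred_known _ _ _ _ glued_known_lip).
    right. exists x, y. auto.
  - intros a. symmetry. apply glued_inC_common.
Qed.

End Amalgam.

Theorem RFR_AP : AP.
Proof. intros A B C f g Hf Hg. exact (amalgamation Hf Hg). Qed.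

Definition empty_dist (x y : Empty_set) : Rbar := match x with end.
Definition empty_pred (x y : Empty_set) : R := match x with end.

Lemma empty_forest : is_Rforest empty_dist.
Proof.
  split; [|split].
  - repeat split; intros x; destruct x.
  - intros u. destruct (u 0%nat).
  - intros x; destruct x.
Qed.

Lemma empty_lip : one_one_lipschitz empty_dist empty_pred.
Proof. split; [|split]; intros x; destruct x. Qed.

Definition empty_model : RFRmodel := {|
  carrier := Empty_set; mdist := empty_dist; mpred := empty_pred;
  m_forest := empty_forest; m_lip := empty_lip
|}.

Lemma empty_embedding (M : RFRmodel) : embedding empty_model M (fun e => match e with end).
Proof. split; intros x; destruct x. Qed.

Theorem RFR_JEP : JEP.
Proof.
  intros A B. destruct (RFR_AP (empty_embedding A) (empty_embedding B)) as [D [f [g [Hf [Hg _]]]]].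
  exists D, f, g. auto.
Qed.

Theorem proposition2p20 :
  (forall A B : RFRmodel, exists (C : RFRmodel) (f : A -> C) (g : B -> C),
      embedding A C f /\ embedding B C g) /\
  (forall (A B C : RFRmodel) (f : A -> B) (g : A -> C),
      embedding A B f -> embedding A C g ->
      exists (D : RFRmodel) (f' : B -> D) (g' : C -> D),
        embedding B D f' /\ embedding C D g' /\ forall a, f' (f a) = g' (g a)).
Proof. exact (conj RFR_JEP RFR_AP). Qed.
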